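(* For the linear control system $\Sigma$ the following hold. 1. If $\alpha=a\alpha+b\beta=0$, there is $\varepsilon>0$ such that for every $x\in(1-\varepsilon,1+\varepsilon)$ the vertical line $\{x\}\times\mathbb{R}$ is a control set. 2. If $\alpha=0$ and $a\alpha+b\beta\neq0$, then for every $x>0$, $\Sigma$ has a control set of the form $\{x\}\times I_x$, where $I_x\subset\mathbb{R}$ is a bounded interval with nonempty interior containing $-ab^{-1}(x-1)$. In particular the control sets are vertical segments meeting the line $\{(x,y)\in G: y=-ab^{-1}(x-1)\}$. 3. If $\alpha\neq0$ and $a\alpha+b\beta=0$, then $\Sigma$ has exactly one control set, namely $\{(x,y)\in G: y=\beta\alpha^{-1}(x-1)\}$. 4. If $\alpha(a\alpha+b\beta)\neq0$ and $b=0$, then the unique control set of $\Sigma$ is $G$. 5. If $\alpha(a\alpha+b\beta)\neq0$ and $b\neq0$, then $\Sigma$ has a unique control set $\mathcal C$. It is a cone with vertex $(0,ab^{-1})$: its interior is an open angular sector $\{(0,ab^{-1})+sv_1+tv_2: s,t>0\}$, with $v_1,v_2\in\mathbb{R}^2$ linearly independent, contained in $\{(x,y):x>0\}$.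
   Context: Let $G=\{(x,y)\in\mathbb{R}^2:x>0\}$, a Lie group with product $(x_1,y_1)\cdot(x_2,y_2)=(x_1x_2,y_2+x_2y_1)$. Fix $\Omega=[u_*,u^*]$ with $u_*<0<u^*$. The admissible controls $\mathcal U$ are the piecewise constant functions $\mathbb{R}\to\Omega$. The system is $\Sigma$: $\dot x=u\alpha x$, $\dot y=a(x-1)+by+ux\beta$, with $(a,b),(\alpha,\beta)\in\mathbb{R}^2\setminus\{(0,0)\}$. We write $\varphi(t,p,u)$ for its solutions and $\mathcal O^+(p)=\{\varphi(t,p,u):t\ge0,u\in\mathcal U\}$; closures are taken in $G$. A control set is a subset $\mathcal C\subset G$ that is maximal with respect to inclusion among the sets satisfying both of the following: (i) every $p\in\mathcal C$ admits $u\in\mathcal U$ with $\varphi(t,p,u)\in\mathcal C$ for all $t\ge0$; (ii) $\mathcal C\subset\operatorname{cl}\mathcal O^+(p)$ for all $p\in\mathcal C$. *)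

From Stdlib Require Import Reals Lra List.
Open Scope R_scope.

(* Points of G are pairs (x,y) : R*R with x > 0. Sets are predicates on R*R. *)
Definition pt := (R * R)%type.
Definition inG (p : pt) : Prop := 0 < fst p.

Definition locally_const (u : R -> R) (t : R) : Prop :=
  exists d, 0 < d /\ forall s, Rabs (s - t) < d -> u s = u t.

(* Admissible controls: piecewise constant functions R -> [umin, umax]:
   on every compact interval u is locally constant except at finitely many points. *)
Definition admissible (umin umax : R) (u : R -> R) : Prop :=
  (forall t, umin <= u t <= umax) /\
  (forall T, exists l : list R, forall t, -T <= t <= T -> ~ In t l -> locally_const u t).

(* gam is the solution phi(., p, u) of
     x' = u alpha x,  y' = a (x - 1) + b y + u x beta,   gam 0 = p :
   continuous, and satisfying the ODE at every point where u is locally constant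
   (i.e. away from the switching times). *)
Definition is_solution (a b al be : R) (u : R -> R) (p : pt) (gam : R -> pt) : Prop :=
  gam 0 = p /\
  (forall t, continuity_pt (fun s => fst (gam s)) t /\ continuity_pt (fun s => snd (gam s)) t) /\
  (forall t, locally_const u t ->
     derivable_pt_lim (fun s => fst (gam s)) t (u t * al * fst (gam t)) /\
     derivable_pt_lim (fun s => snd (gam s)) t
        (a * (fst (gam t) - 1) + b * snd (gam t) + u t * fst (gam t) * be)).

Definition orbit_plus (a b al be umin umax : R) (p : pt) (q : pt) : Prop :=
  exists u gam t, admissible umin umax u /\ is_solution a b al be u p gam /\
                  0 <= t /\ gam t = q.

Definition dist2 (p q : pt) : R :=
  sqrt ((fst p - fst q)^2 + (snd p - snd q)^2).

Definition closureG (S : pt -> Prop) (q : pt) : Prop :=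
  inG q /\ forall e, 0 < e -> exists s, S s /\ dist2 s q < e.

Definition interior2 (S : pt -> Prop) (q : pt) : Prop :=
  exists r, 0 < r /\ forall s, dist2 s q < r -> S s.

Definition set_eq (S T : pt -> Prop) : Prop := forall p, S p <-> T p.

(* conditions (i) and (ii) of the definition of control set (C a subset of G) *)
Definition pre_control_set (a b al be umin umax : R) (C : pt -> Prop) : Prop :=
  (forall p, C p -> inG p) /\
  (forall p, C p -> exists u gam, admissible umin umax u /\ is_solution a b al be u p gam /\
                     forall t, 0 <= t -> C (gam t)) /\
  (forall p, C p -> forall q, C q -> closureG (orbit_plus a b al be umin umax p) q).

Definition is_control_set (a b al be umin umax : R) (C : pt -> Prop) : Prop :=
  pre_control_set a b al be umin umax C /\
  forall D, pre_control_set a b al be umin umax D ->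
            (forall p, C p -> D p) -> (forall p, D p -> C p).

Definition is_interval (I : R -> Prop) : Prop :=
  forall y1 y2 y, I y1 -> I y2 -> y1 <= y <= y2 -> I y.

From Stdlib Require Import Reals Lra List Classical.
From Coquelicot Require Import Coquelicot.
Open Scope R_scope.

(* Each case combines explicit constant-control trajectories, which give
   controllability inside the candidate set, with a quantity that is monotone
   along every trajectory, which keeps any control set inside it.
   For [al = 0] the coordinate [x] is invariant, and on a vertical line [y]
   follows a scalar affine system whose equilibria [equilibrium v] fill an
   interval: attracting (closed interval) for [b < 0], repelling (open
   interval) for [b > 0]; for [b = 0] the drift takes both signs near [x = 1].
   For [a al + b be = 0] the distance [z] to the invariant line evolves as
   [z e^(bt)].  For [b = 0], [x] can be steered freely, and resting at [x = 2]
   or [x = 1/2] moves [y] up or down.  In the generic case the coordinate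
   [z = (y - a/b - be/al x) / kappa] satisfies [z' = b z + x], so [r = z / x]
   obeys [r' = 1 + (b - w) r] with rate [w = u al] in [[rate_min, rate_max]]; the fixed
   points [1 / (w - b)] sweep the cone, inside which [r] and [x] can be steered
   independently, while off the cone the sign of [x (1 + (b - w) r)] for
   [w = m] or [w = M] persists and [z] moves strictly monotonically. *)

Lemma MVT_derivable_pt_lim (f D : R -> R) (a b : R) : a < b ->
  (forall c, a < c < b -> derivable_pt_lim f c (D c)) ->
  (forall c, a <= c <= b -> continuity_pt f c) ->
  exists c, a < c < b /\ f b - f a = D c * (b - a).
Proof.
  intros hab hd hc.
  pose (pr := fun c (P : a < c < b) => exist (fun l => derivable_pt_abs f c l) (D c) (hd c P)).
  destruct (MVT f id a b pr (fun c _ => derivable_pt_id c) hab hc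
     (fun c _ => derivable_continuous_pt _ _ (derivable_pt_id c))) as [c [P E]].
  exists c; split; [exact P|].
  simpl in E. rewrite derive_pt_id in E. unfold id in E. lra.
Qed.

Lemma nondecreasing_except_list (f : R -> R) (l : list R) : forall s t, s <= t ->
  (forall x, s <= x <= t -> continuity_pt f x) ->
  (forall x, s < x < t -> ~ In x l -> exists d, derivable_pt_lim f x d /\ 0 <= d) ->
  f s <= f t.
Proof.
  induction l as [|c l IH]; intros s t hst hc hd.
  - destruct (Req_dec s t) as [->|hne]; [lra|].
    assert (hD : forall x, s < x < t -> derivable_pt_lim f x (Derive f x)).
    { intros x hx. destruct (hd x hx (fun h => h)) as [d [h1 _]].
      apply is_derive_Reals. replace (Derive f x) with d; [apply is_derive_Reals; exact h1|].
      symmetry. apply is_derive_unique. apply is_derive_Reals; exact h1. }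
    destruct (MVT_derivable_pt_lim f (Derive f) s t) as [c [hc1 hc2]]; auto; try lra.
    destruct (hd c hc1 (fun h => h)) as [d [h1 h2]].
    assert (Derive f c = d) by (apply is_derive_unique, is_derive_Reals; exact h1).
    assert (0 <= Derive f c * (t - s)) by (apply Rmult_le_pos; lra). lra.
  - assert (hd' : forall x y, x <= y -> s <= x -> y <= t -> ~ (x < c < y) ->
       forall z, x < z < y -> ~ In z l -> exists d, derivable_pt_lim f z d /\ 0 <= d).
    { intros x y hxy hsx hyt hn z hz hzl. apply hd; [lra|]. intros [e|e]; [subst; tauto|tauto]. }
    destruct (classic (s < c < t)) as [hin|hout].
    + apply Rle_trans with (f c); apply IH; try lra; try (intros; apply hc; lra).
      * apply (hd' s c); lra.
      * apply (hd' c t); lra.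
    + apply IH; auto. apply (hd' s t); lra.
Qed.

Lemma continuity_pt_eps (f : R -> R) x : continuity_pt f x <->
  (forall eps, 0 < eps -> exists del, 0 < del /\
     forall y, Rabs (y - x) < del -> Rabs (f y - f x) < eps).
Proof.
  unfold continuity_pt, continue_in, limit1_in, limit_in. simpl. unfold R_dist, D_x, no_cond.
  split; intros H eps he; destruct (H eps he) as [del [hd H']]; exists del; split; auto.
  - intros y hy. destruct (Req_dec y x) as [->|hne].
    + rewrite Rminus_diag, Rabs_R0; lra.
    + apply H'; split; auto.
  - intros y [_ hy]. apply H'; auto.
Qed.

Lemma derivable_pt_lim_locally_eq f g t l d : 0 < d ->
  (forall s, Rabs (s - t) < d -> f s = g s) ->
  derivable_pt_lim g t l -> derivable_pt_lim f t l.
Proof.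
  intros hd he hg eps heps. destruct (hg eps heps) as [del hdel].
  assert (hm : 0 < Rmin del d) by (apply Rmin_pos; [apply cond_pos|auto]).
  exists (mkposreal _ hm). intros h hh0 hh. simpl in hh.
  assert (Rmin del d <= del) by apply Rmin_l. assert (Rmin del d <= d) by apply Rmin_r.
  rewrite (he (t + h)), (he t).
  - apply hdel; auto. lra.
  - rewrite Rminus_diag, Rabs_R0; auto.
  - replace (t + h - t) with h by ring. lra.
Qed.

Lemma derivable_pt_lim_shift f t T l :
  derivable_pt_lim f (t - T) l -> derivable_pt_lim (fun s => f (s - T)) t l.
Proof.
  intros hf eps heps. destruct (hf eps heps) as [del hdel]. exists del.
  intros h h0 hh. replace (t + h - T) with (t - T + h) by ring. apply hdel; auto.
Qed.

Lemma MVT_punctured (f D : R -> R) T h : h <> 0 ->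
  (forall s, Rabs (s - T) <= Rabs h -> continuity_pt f s) ->
  (forall s, 0 < Rabs (s - T) < Rabs h -> derivable_pt_lim f s (D s)) ->
  exists c, 0 < Rabs (c - T) < Rabs h /\ f (T + h) - f T = D c * h.
Proof.
  intros hh hc hd. destruct (Rlt_or_le 0 h) as [hp|hn].
  - rewrite Rabs_right in hc, hd |- * by lra.
    destruct (MVT_derivable_pt_lim f D T (T + h)) as [c [hc1 hc2]]; try lra.
    + intros c hc1. apply hd. rewrite Rabs_right; lra.
    + intros c hc1. apply hc. rewrite Rabs_right; lra.
    + exists c. rewrite Rabs_right by lra. split; [lra|]. rewrite hc2. ring.
  - rewrite Rabs_left in hc, hd |- * by lra.
    destruct (MVT_derivable_pt_lim f D (T + h) T) as [c [hc1 hc2]]; try lra.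
    + intros c hc1. apply hd. rewrite Rabs_left; lra.
    + intros c hc1. apply hc. rewrite Rabs_left1; lra.
    + exists c. rewrite Rabs_left by lra. split; [lra|]. rewrite <- Ropp_minus_distr, hc2. ring.
Qed.

Lemma derivable_pt_lim_punctured (f D : R -> R) T d : 0 < d ->
  (forall s, Rabs (s - T) < d -> continuity_pt f s) ->
  (forall s, 0 < Rabs (s - T) < d -> derivable_pt_lim f s (D s)) ->
  continuity_pt D T -> derivable_pt_lim f T (D T).
Proof.
  intros hd hc hder hD eps heps.
  destruct (proj1 (continuity_pt_eps D T) hD eps heps) as [del [hdel HD]].
  assert (hm : 0 < Rmin del d) by (apply Rmin_pos; auto).
  assert (Rmin del d <= del) by apply Rmin_l. assert (Rmin del d <= d) by apply Rmin_r.
  exists (mkposreal _ hm). intros h hh0 hh. simpl in hh.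
  destruct (MVT_punctured f D T h hh0) as [c [hcT E]].
  - intros s hs. apply hc. lra.
  - intros s hs. apply hder. lra.
  - replace ((f (T + h) - f T) / h) with (D c) by (rewrite E; field; auto).
    apply HD. lra.
Qed.

Lemma exp_le_compat x y : x <= y -> exp x <= exp y.
Proof. intros [h|<-]; [left; apply exp_increasing; auto|lra]. Qed.

Lemma is_derive_sqr_exp (X : R -> R) dx k x : is_derive X x dx ->
  is_derive (fun s => X s ^ 2 * exp (k * s)) x ((2 * dx + k * X x) * X x * exp (k * x)).
Proof.
  intros hX. auto_derive; [exists dx; exact hX|].
  replace (Derive (fun y => X y) x) with dx by (symmetry; apply is_derive_unique; exact hX).
  ring.
Qed.

Lemma is_derive_affine_exp (X Y : R -> R) dx dy c1 c2 c0 k de x :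
  is_derive X x dx -> is_derive Y x dy ->
  is_derive (fun s => (c1 * X s + c2 * Y s + c0) * exp (k * s) + de * s) x
    ((c1 * dx + c2 * dy + k * (c1 * X x + c2 * Y x + c0)) * exp (k * x) + de).
Proof.
  intros hX hY. auto_derive; [split; [exists dx; exact hX|split; [exists dy; exact hY|exact I]]|].
  replace (Derive (fun y => X y) x) with dx by (symmetry; apply is_derive_unique; exact hX).
  replace (Derive (fun y => Y y) x) with dy by (symmetry; apply is_derive_unique; exact hY).
  ring.
Qed.

(** * Concatenation of controls *)

Definition concat {A : Type} (f1 f2 : R -> A) (T t : R) : A :=
  if Rlt_dec t T then f1 t else f2 (t - T).

Lemma concat_l {A : Type} (f1 f2 : R -> A) T t : t < T -> concat f1 f2 T t = f1 t.
Proof. intros h. unfold concat. destruct (Rlt_dec t T); [auto|lra]. Qed.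

Lemma concat_r {A : Type} (f1 f2 : R -> A) T t : T <= t -> concat f1 f2 T t = f2 (t - T).
Proof. intros h. unfold concat. destruct (Rlt_dec t T); [lra|auto]. Qed.

Lemma continuity_pt_concat {A : Type} (pr : A -> R) (f1 f2 : R -> A) T :
  (forall t, continuity_pt (fun s => pr (f1 s)) t) ->
  (forall t, continuity_pt (fun s => pr (f2 s)) t) -> f1 T = f2 0 ->
  forall t, continuity_pt (fun s => pr (concat f1 f2 T s)) t.
Proof.
  intros h1 h2 hT t. apply continuity_pt_eps. intros eps heps.
  destruct (proj1 (continuity_pt_eps _ _) (h1 t) eps heps) as [d1 [hd1 H1]].
  destruct (proj1 (continuity_pt_eps _ _) (h2 (t - T)) eps heps) as [d2 [hd2 H2]].
  destruct (Rtotal_order t T) as [lt|[->|gt]].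
  - exists (Rmin d1 (T - t)). split; [apply Rmin_pos; lra|].
    intros y hy. assert (Rmin d1 (T - t) <= d1) by apply Rmin_l.
    assert (Rmin d1 (T - t) <= T - t) by apply Rmin_r. apply Rabs_def2 in hy.
    rewrite !concat_l by lra. apply H1. apply Rabs_def1; lra.
  - exists (Rmin d1 d2). split; [apply Rmin_pos; lra|].
    intros y hy. assert (Rmin d1 d2 <= d1) by apply Rmin_l.
    assert (Rmin d1 d2 <= d2) by apply Rmin_r. apply Rabs_def2 in hy.
    rewrite (concat_r _ _ T T), Rminus_diag, <- hT by lra. rewrite Rminus_diag in H2.
    destruct (Rlt_or_le y T).
    + rewrite concat_l by lra. apply H1. apply Rabs_def1; lra.
    + rewrite concat_r, hT by lra. apply H2. apply Rabs_def1; lra.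
  - exists (Rmin d2 (t - T)). split; [apply Rmin_pos; lra|].
    intros y hy. assert (Rmin d2 (t - T) <= d2) by apply Rmin_l.
    assert (Rmin d2 (t - T) <= t - T) by apply Rmin_r. apply Rabs_def2 in hy.
    rewrite !concat_r by lra. apply H2. apply Rabs_def1; lra.
Qed.

Lemma locally_const_locally_eq (f g : R -> R) t d : 0 < d ->
  (forall s, Rabs (s - t) < d -> f s = g s) -> locally_const g t -> locally_const f t.
Proof.
  intros hd he [d' [hd' hg]]. exists (Rmin d d'). split; [apply Rmin_pos; auto|].
  assert (Rmin d d' <= d) by apply Rmin_l. assert (Rmin d d' <= d') by apply Rmin_r.
  assert (Rabs (t - t) < d) by (rewrite Rminus_diag, Rabs_R0; lra).
  intros s hs. rewrite (he s), (he t), (hg s); auto; lra.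
Qed.

Lemma locally_const_shift (u : R -> R) T t :
  locally_const (fun s => u (s - T)) t <-> locally_const u (t - T).
Proof.
  split; intros [d [hd H]]; exists d; split; auto; intros s hs.
  - replace s with (s + T - T) by ring. apply H. replace (s + T - t) with (s - (t - T)) by ring. auto.
  - apply H. replace (s - T - (t - T)) with (s - t) by ring. auto.
Qed.

Lemma locally_const_of_ball (u : R -> R) t d s :
  (forall s, Rabs (s - t) < d -> u s = u t) -> Rabs (s - t) < d -> locally_const u s.
Proof.
  intros hu hs. exists (d - Rabs (s - t)). split; [lra|]. intros s' hs'.
  assert (Rabs (s' - t) <= Rabs (s' - s) + Rabs (s - t)).
  { replace (s' - t) with ((s' - s) + (s - t)) by ring. apply Rabs_triang. }
  rewrite (hu s'), (hu s); auto; lra.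
Qed.

Lemma concat_locally_l {A : Type} (u1 u2 : R -> A) T t : t < T ->
  forall s, Rabs (s - t) < T - t -> concat u1 u2 T s = u1 s.
Proof. intros ht s hs. apply Rabs_def2 in hs. apply concat_l. lra. Qed.

Lemma concat_locally_r {A : Type} (u1 u2 : R -> A) T t : T < t ->
  forall s, Rabs (s - t) < t - T -> concat u1 u2 T s = u2 (s - T).
Proof. intros ht s hs. apply Rabs_def2 in hs. apply concat_r. lra. Qed.

Lemma admissible_concat umin umax u1 u2 T :
  admissible umin umax u1 -> admissible umin umax u2 -> admissible umin umax (concat u1 u2 T).
Proof.
  intros [hv1 hp1] [hv2 hp2]. split.
  - intros t. unfold concat. destruct (Rlt_dec t T); auto.
  - intros B. destruct (hp1 B) as [l1 hl1]. destruct (hp2 (B + Rabs T)) as [l2 hl2].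
    exists (T :: l1 ++ map (fun z => z + T) l2). intros t ht hn.
    assert (hnl : ~ In t l1 /\ ~ In (t - T) l2).
    { split; intro i; apply hn; right; apply in_or_app; [left; auto|right].
      replace t with (t - T + T) by ring. apply in_map with (f := fun z => z + T); auto. }
    destruct (Rtotal_order t T) as [lt|[eq|gt]]; [| subst; exfalso; apply hn; left; auto|].
    + apply (locally_const_locally_eq _ u1 t (T - t)); [lra|apply concat_locally_l; auto|].
      apply hl1; tauto.
    + apply (locally_const_locally_eq _ (fun s => u2 (s - T)) t (t - T));
        [lra|apply concat_locally_r; auto|].
      apply locally_const_shift, hl2; [|tauto].
      split; unfold Rabs in *; destruct (Rcase_abs T); lra.
Qed.

Lemma continuity_pt_vector_field (a b al be v : R) (g : R -> pt) t :
  continuity_pt (fun s => fst (g s)) t -> continuity_pt (fun s => snd (g s)) t ->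
  continuity_pt (fun s => v * al * fst (g s)) t /\
  continuity_pt (fun s => a * (fst (g s) - 1) + b * snd (g s) + v * fst (g s) * be) t.
Proof.
  intros hx hy.
  assert (hc : forall c, continuity_pt (fun _ => c) t) by (intros c; apply continuity_pt_const;
    intros ? ?; auto).
  split.
  - apply continuity_pt_mult; auto.
  - apply continuity_pt_plus; [apply continuity_pt_plus|].
    + apply continuity_pt_mult; auto. apply continuity_pt_minus; auto.
    + apply continuity_pt_mult; auto.
    + apply continuity_pt_mult; [apply continuity_pt_mult|]; auto.
Qed.

Lemma derivable_pt_lim_concat_off a b al be u1 u2 g1 g2 p T :
  is_solution a b al be u1 p g1 -> is_solution a b al be u2 (g1 T) g2 ->
  forall t, t <> T -> locally_const (concat u1 u2 T) t ->
  derivable_pt_lim (fun s => fst (concat g1 g2 T s)) t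
    (concat u1 u2 T t * al * fst (concat g1 g2 T t)) /\
  derivable_pt_lim (fun s => snd (concat g1 g2 T s)) t
    (a * (fst (concat g1 g2 T t) - 1) + b * snd (concat g1 g2 T t)
     + concat u1 u2 T t * fst (concat g1 g2 T t) * be).
Proof.
  intros [_ [_ hd1]] [_ [_ hd2]] t hne hlc. destruct (Rtotal_order t T) as [lt|[eq|gt]];
    [|contradiction|].
  - apply (locally_const_locally_eq u1 _ t (T - t)) in hlc;
      [|lra|intros s hs; symmetry; apply concat_locally_l with t; auto].
    destruct (hd1 t hlc) as [D1 D2]. rewrite !concat_l by lra.
    split; eapply derivable_pt_lim_locally_eq with (d := T - t); try lra; eauto;
      intros s hs; rewrite (concat_locally_l g1 g2 T t lt s hs); reflexivity.
  - apply (locally_const_locally_eq (fun s => u2 (s - T)) _ t (t - T)) in hlc;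
      [|lra|intros s hs; symmetry; apply concat_locally_r with t; auto].
    apply locally_const_shift in hlc.
    destruct (hd2 (t - T) hlc) as [D1 D2]. rewrite !concat_r by lra.
    split; eapply derivable_pt_lim_locally_eq with (d := t - T); try lra;
      try (intros s hs; rewrite (concat_locally_r g1 g2 T t gt s hs); reflexivity);
      apply (derivable_pt_lim_shift (fun s => _ (g2 s))); auto.
Qed.

(* At the switching time the derivative is recovered from both sides, since
   the control is constant on a whole neighbourhood. *)
Lemma is_solution_concat a b al be u1 u2 g1 g2 p T : 0 <= T ->
  is_solution a b al be u1 p g1 -> is_solution a b al be u2 (g1 T) g2 ->
  is_solution a b al be (concat u1 u2 T) p (concat g1 g2 T).
Proof.
  intros hT hs1 hs2. assert (hoff := derivable_pt_lim_concat_off a b al be u1 u2 g1 g2 p T hs1 hs2).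
  destruct hs1 as [h01 [hc1 _]], hs2 as [h02 [hc2 _]].
  set (U := concat u1 u2 T) in *. set (G := concat g1 g2 T) in *.
  assert (hc : forall t, continuity_pt (fun s => fst (G s)) t /\ continuity_pt (fun s => snd (G s)) t).
  { intros t. split; apply continuity_pt_concat; auto; intros s; apply hc1 || apply hc2. }
  split; [|split; [exact hc|]].
  - unfold G, concat. destruct (Rlt_dec 0 T); auto.
    replace T with 0 in * by lra. rewrite Rminus_0_r, h02. auto.
  - intros t hlc. destruct (Req_dec t T) as [->|hne]; [|apply hoff; auto].
    destruct hlc as [d [hd hU]].
    assert (hs : forall s, 0 < Rabs (s - T) < d ->
       derivable_pt_lim (fun s => fst (G s)) s (U T * al * fst (G s)) /\
       derivable_pt_lim (fun s => snd (G s)) s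
         (a * (fst (G s) - 1) + b * snd (G s) + U T * fst (G s) * be)).
    { intros s hsT. rewrite <- (hU s) by lra. apply hoff.
      - intros e. subst. rewrite Rminus_diag, Rabs_R0 in hsT. lra.
      - apply (locally_const_of_ball U T d); [apply hU|lra]. }
    destruct (continuity_pt_vector_field a b al be (U T) G T (proj1 (hc T)) (proj2 (hc T))) as [C1 C2].
    split.
    + apply (derivable_pt_lim_punctured _ (fun s => U T * al * fst (G s)) T d hd); auto.
      * intros s _; apply hc.
      * intros s hsT; apply hs; auto.
    + apply (derivable_pt_lim_punctured _
        (fun s => a * (fst (G s) - 1) + b * snd (G s) + U T * fst (G s) * be) T d hd); auto.
      * intros s _; apply hc.
      * intros s hsT; apply hs; auto.
Qed.

Lemma orbit_plus_trans a b al be umin umax p q r :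
  orbit_plus a b al be umin umax p q -> orbit_plus a b al be umin umax q r ->
  orbit_plus a b al be umin umax p r.
Proof.
  intros [u1 [g1 [t1 [ha1 [hs1 [ht1 e1]]]]]] [u2 [g2 [t2 [ha2 [hs2 [ht2 e2]]]]]]. subst q.
  exists (concat u1 u2 t1), (concat g1 g2 t1), (t1 + t2).
  split; [apply admissible_concat; auto|].
  split; [apply is_solution_concat; auto|].
  split; [lra|]. rewrite concat_r by lra. replace (t1 + t2 - t1) with t2 by ring. auto.
Qed.

(** * Affine forms and closures in the plane *)

Definition affine_form (c1 c2 c0 : R) (p : pt) : R := c1 * fst p + c2 * snd p + c0.

Lemma dist2_refl q : dist2 q q = 0.
Proof. unfold dist2. rewrite !Rminus_diag. replace (0 ^ 2 + 0 ^ 2) with 0 by ring. apply sqrt_0. Qed.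

Lemma dist2_ge_fst s q : Rabs (fst s - fst q) <= dist2 s q.
Proof.
  unfold dist2. rewrite <- sqrt_Rsqr_abs. apply sqrt_le_1_alt. unfold Rsqr.
  assert (0 <= (snd s - snd q) ^ 2) by apply pow2_ge_0. simpl in *. lra.
Qed.

Lemma dist2_ge_snd s q : Rabs (snd s - snd q) <= dist2 s q.
Proof.
  unfold dist2. rewrite <- sqrt_Rsqr_abs. apply sqrt_le_1_alt. unfold Rsqr.
  assert (0 <= (fst s - fst q) ^ 2) by apply pow2_ge_0. simpl in *. lra.
Qed.

Lemma dist2_vert x y1 y2 : dist2 (x, y1) (x, y2) = Rabs (y1 - y2).
Proof. unfold dist2. simpl. rewrite Rminus_diag, <- sqrt_Rsqr_abs. f_equal. unfold Rsqr. ring. Qed.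

Definition lipschitz (f : pt -> R) (K : R) : Prop :=
  0 <= K /\ forall s q, Rabs (f s - f q) <= K * dist2 s q.

Definition adherent (S : pt -> Prop) (q : pt) : Prop :=
  forall e, 0 < e -> exists s, S s /\ dist2 s q < e.

Definition closed2 (B : pt -> Prop) : Prop := forall q, adherent B q -> B q.

Lemma lipschitz_ext (f g : pt -> R) K : (forall p, f p = g p) -> lipschitz g K -> lipschitz f K.
Proof. intros e [h1 h2]. split; auto. intros s q. rewrite !e. auto. Qed.

Lemma lipschitz_affine_form c1 c2 c0 : lipschitz (affine_form c1 c2 c0) (Rabs c1 + Rabs c2).
Proof.
  assert (0 <= Rabs c1) by apply Rabs_pos. assert (0 <= Rabs c2) by apply Rabs_pos.
  split; [lra|]. intros s q. unfold affine_form.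
  replace (c1 * fst s + c2 * snd s + c0 - (c1 * fst q + c2 * snd q + c0))
    with (c1 * (fst s - fst q) + c2 * (snd s - snd q)) by ring.
  eapply Rle_trans; [apply Rabs_triang|]. rewrite !Rabs_mult.
  assert (X := dist2_ge_fst s q). assert (Y := dist2_ge_snd s q).
  assert (0 <= Rabs (fst s - fst q)) by apply Rabs_pos. nra.
Qed.

Lemma adherent_ge (f : pt -> R) K (S : pt -> Prop) c q : lipschitz f K ->
  (forall s, S s -> c <= f s) -> adherent S q -> c <= f q.
Proof.
  intros [hK hf] hS hq. destruct (Rle_or_lt c (f q)) as [h|h]; auto. exfalso.
  destruct (hq ((c - f q) / (K + 1))) as [s [hs1 hs2]]; [apply Rdiv_lt_0_compat; lra|].
  assert (A := hS s hs1). assert (B := Rle_trans _ _ _ (RRle_abs _) (hf s q)).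
  assert (C : K * dist2 s q <= K * ((c - f q) / (K + 1))) by (apply Rmult_le_compat_l; lra).
  assert (E : K * ((c - f q) / (K + 1)) < c - f q).
  { apply Rmult_lt_reg_r with (K + 1); [lra|]. field_simplify; [|lra]. nra. }
  lra.
Qed.

Lemma adherent_le (f : pt -> R) K (S : pt -> Prop) c q : lipschitz f K ->
  (forall s, S s -> f s <= c) -> adherent S q -> f q <= c.
Proof.
  intros [hK hf] hS hq.
  assert (L : lipschitz (fun p => - f p) K).
  { split; auto. intros s q'. replace (- f s - - f q') with (- (f s - f q')) by ring.
    rewrite Rabs_Ropp. auto. }
  assert (X := adherent_ge _ K S (- c) q L ltac:(intros s hs; specialize (hS s hs); lra) hq).
  lra.
Qed.

Lemma closed2_ge f K c : lipschitz f K -> closed2 (fun p => c <= f p).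
Proof. intros hl q hq. apply (adherent_ge f K (fun p => c <= f p) c q hl); auto. Qed.

Lemma closed2_le f K c : lipschitz f K -> closed2 (fun p => f p <= c).
Proof. intros hl q hq. apply (adherent_le f K (fun p => f p <= c) c q hl); auto. Qed.

Lemma closed2_or (A B : pt -> Prop) :
  closed2 A -> closed2 B -> closed2 (fun p => A p \/ B p).
Proof.
  intros hA hB q hq. destruct (classic (adherent A q)) as [h|h]; [left; auto|right].
  apply hB. apply not_all_ex_not in h as [e0 h]. apply imply_to_and in h as [he0 h].
  intros e he. destruct (hq (Rmin e e0)) as [s [[hs|hs] hd]]; [apply Rmin_pos; auto| |].
  - exfalso. apply h. exists s. split; auto. eapply Rlt_le_trans; [apply hd|apply Rmin_r].
  - exists s. split; auto. eapply Rlt_le_trans; [apply hd|apply Rmin_l].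
Qed.

Lemma closed2_False : closed2 (fun _ => False).
Proof. intros q H. destruct (H 1 Rlt_0_1) as [s [[] _]]. Qed.

Lemma closed2_adherent (B S : pt -> Prop) q :
  closed2 B -> (forall s, S s -> B s) -> adherent S q -> B q.
Proof.
  intros hB hS hq. apply hB. intros e he. destruct (hq e he) as [s [hs hd]]. eauto.
Qed.

Lemma lipschitz_scale_affine c c1 c2 c0 :
  lipschitz (fun r => c * affine_form c1 c2 c0 r) (Rabs (c * c1) + Rabs (c * c2)).
Proof.
  apply (lipschitz_ext _ (affine_form (c * c1) (c * c2) (c * c0))); [|apply lipschitz_affine_form].
  intros p. unfold affine_form. ring.
Qed.

Lemma lipschitz_positive_ball f K q : lipschitz f K -> 0 < f q ->
  exists r, 0 < r /\ forall s, dist2 s q < r -> 0 < f s.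
Proof.
  intros [hK hf] hq. exists (f q / (K + 1)). split; [apply Rdiv_lt_0_compat; lra|].
  intros s hs. assert (B := hf s q). rewrite Rabs_minus_sym in B.
  assert (B2 := Rle_trans _ _ _ (RRle_abs _) B).
  assert (hd : 0 <= dist2 s q) by apply sqrt_pos.
  assert (C : K * dist2 s q <= K * (f q / (K + 1))) by (apply Rmult_le_compat_l; lra).
  assert (E : K * (f q / (K + 1)) < f q) by (apply Rmult_lt_reg_r with (K + 1); [lra|];
    field_simplify; nra).
  lra.
Qed.

Section System.

Variables a b al be umin umax : R.

Local Notation sol := (is_solution a b al be).
Local Notation adm := (admissible umin umax).
Local Notation orbit := (orbit_plus a b al be umin umax).
Local Notation pre_cs := (pre_control_set a b al be umin umax).
Local Notation cs := (is_control_set a b al be umin umax).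

Lemma solution_is_derive u p g t : sol u p g -> locally_const u t ->
  is_derive (fun s => fst (g s)) t (u t * al * fst (g t)) /\
  is_derive (fun s => snd (g s)) t (a * (fst (g t) - 1) + b * snd (g t) + u t * fst (g t) * be).
Proof. intros [_ [_ hd]] hl. destruct (hd t hl). split; apply is_derive_Reals; auto. Qed.

Lemma const_control_solution v p (X Y : R -> R) :
  umin <= v <= umax -> X 0 = fst p -> Y 0 = snd p ->
  (forall t, is_derive X t (v * al * X t)) ->
  (forall t, is_derive Y t (a * (X t - 1) + b * Y t + v * X t * be)) ->
  adm (fun _ => v) /\ sol (fun _ => v) p (fun t => (X t, Y t)).
Proof.
  intros hv hx0 hy0 hX hY. split; [split|].
  - intros; auto.
  - intros T. exists nil. intros t _ _. exists 1. split; [lra|auto].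
  - split; [|split].
    + destruct p; simpl in *; subst; auto.
    + intros t; simpl; split; apply derivable_continuous_pt; eexists; apply is_derive_Reals; eauto.
    + intros t _; simpl; split; apply is_derive_Reals; auto.
Qed.

Lemma const_control_orbit v p (X Y : R -> R) :
  umin <= v <= umax -> X 0 = fst p -> Y 0 = snd p ->
  (forall t, is_derive X t (v * al * X t)) ->
  (forall t, is_derive Y t (a * (X t - 1) + b * Y t + v * X t * be)) ->
  forall t, 0 <= t -> orbit p (X t, Y t).
Proof.
  intros hv hx hy hX hY t ht. destruct (const_control_solution v p X Y) as [A S]; auto.
  exists (fun _ => v), (fun t => (X t, Y t)), t. auto.
Qed.

Lemma orbit_plus_closure p q : orbit p q -> inG q -> closureG (orbit p) q.
Proof. intros ho hq. split; auto. intros e he. exists q. rewrite dist2_refl. auto. Qed.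

Lemma control_set_of_maximum (C0 : pt -> Prop) : pre_cs C0 ->
  (forall D, pre_cs D -> forall p, D p -> C0 p) ->
  cs C0 /\ forall C, cs C -> set_eq C C0.
Proof.
  intros hC hall. split.
  - split; auto. intros D hD _ p hp. apply (hall D hD p hp).
  - intros C [hCpre hmax] p. split.
    + intros hp. apply (hall C hCpre p hp).
    + intros hp. apply (hmax C0 hC (hall C hCpre) p hp).
Qed.

Lemma admissible_nondecreasing (f u : R -> R) (P : R -> Prop) : adm u ->
  (forall x, continuity_pt f x) ->
  (forall x, P x -> locally_const u x -> exists d, derivable_pt_lim f x d /\ 0 <= d) ->
  forall s t, s <= t -> (forall x, s < x < t -> P x) -> f s <= f t.
Proof.
  intros [_ hu] hc hd s t hst hP.
  destruct (hu (Rabs s + Rabs t)) as [l hl].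
  apply (nondecreasing_except_list f l s t hst (fun x _ => hc x)).
  intros x hx hn. apply hd; [apply hP; auto|]. apply hl; auto.
  unfold Rabs; destruct (Rcase_abs s); destruct (Rcase_abs t); lra.
Qed.

Lemma admissible_constant (f u : R -> R) : adm u ->
  (forall x, continuity_pt f x) ->
  (forall x, locally_const u x -> derivable_pt_lim f x 0) ->
  forall s t, f s = f t.
Proof.
  intros ha hc hd.
  assert (H : forall g, (forall x, continuity_pt g x) ->
     (forall x, locally_const u x -> derivable_pt_lim g x 0) -> forall s t, s <= t -> g s <= g t).
  { intros g hgc hgd s t hst. apply (admissible_nondecreasing g u (fun _ => True) ha hgc); auto.
    intros x _ hl. exists 0. split; [apply hgd; auto|lra]. }
  assert (Hopp : forall s t, s <= t -> - f s <= - f t).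
  { apply H; [intros; apply continuity_pt_opp; auto|].
    intros x hl. replace 0 with (- 0) by ring. apply derivable_pt_lim_opp. auto. }
  intros s t. destruct (Rle_or_lt s t) as [h|h].
  - assert (f s <= f t) by (apply H; auto). assert (- f s <= - f t) by auto. lra.
  - assert (f t <= f s) by (apply H; auto; lra). assert (- f t <= - f s) by (apply Hopp; lra). lra.
Qed.

Definition rate_min := Rmin (al * umin) (al * umax).
Definition rate_max := Rmax (al * umin) (al * umax).

Lemma rate_bounds v : umin <= v <= umax -> rate_min <= v * al <= rate_max.
Proof.
  intros [h1 h2]. unfold rate_min, rate_max, Rmin, Rmax.
  destruct (Rle_dec (al * umin) (al * umax)); destruct (Rle_lt_dec 0 al); split; nra.
Qed.

Lemma control_of_rate w : umin <= umax -> al <> 0 ->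
  rate_min <= w <= rate_max -> umin <= w / al <= umax.
Proof.
  intros hu hal [h1 h2]. unfold rate_min, rate_max, Rmin, Rmax in *.
  destruct (Rlt_or_le 0 al) as [hp|hn].
  - assert (E : al * (w / al) = w) by (field; lra).
    destruct (Rle_dec (al * umin) (al * umax)); [|nra].
    split; apply (Rmult_le_reg_l al); auto; rewrite E; lra.
  - assert (E : - al * (w / al) = - w) by (field; lra).
    destruct (Rle_dec (al * umin) (al * umax));
      split; apply (Rmult_le_reg_l (- al)); try lra; rewrite E; nra.
Qed.

Section Signs.

Hypotheses (humin : umin < 0) (humax : 0 < umax) (hal : al <> 0).

Lemma rate_min_neg : rate_min < 0.
Proof. unfold rate_min, Rmin. destruct (Rle_dec _ _); destruct (Rlt_or_le 0 al); nra. Qed.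

Lemma rate_max_pos : 0 < rate_max.
Proof. unfold rate_max, Rmax. destruct (Rle_dec _ _); destruct (Rlt_or_le 0 al); nra. Qed.

Lemma exists_control_rate w : rate_min <= w <= rate_max -> exists v, umin <= v <= umax /\ v * al = w.
Proof.
  intros hw. exists (w / al). split.
  - apply control_of_rate; auto. lra.
  - field. auto.
Qed.

Lemma exists_rate_time l :
  exists v t, umin <= v <= umax /\ v * al <> 0 /\ 0 <= t /\ v * al * t = l.
Proof.
  assert (hm := rate_min_neg). assert (hM := rate_max_pos).
  assert (hw : forall w, rate_min <= w <= rate_max -> w <> 0 -> 0 <= l / w ->
     exists v t, umin <= v <= umax /\ v * al <> 0 /\ 0 <= t /\ v * al * t = l).
  { intros w hw hw0 ht. destruct (exists_control_rate w hw) as [v [hv <-]].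
    exists v, (l / (v * al)). split; [exact hv|split; [exact hw0|split; [exact ht|]]].
    field. split; intro e; apply hw0; rewrite e; ring. }
  destruct (Rle_or_lt 0 l).
  - apply (hw rate_max); try lra. apply Rdiv_le_0_compat; lra.
  - apply (hw rate_min); try lra.
    replace (l / rate_min) with (- l / - rate_min) by (field; lra). apply Rdiv_le_0_compat; lra.
Qed.

End Signs.

(* [(x^2)' = 2 u al x^2 >= 2 rate_min x^2] whatever the sign of [x]. *)
Lemma sqr_fst_solution_lower_bound u p g : adm u -> sol u p g ->
  forall t, 0 <= t -> (fst p * exp (rate_min * t)) ^ 2 <= fst (g t) ^ 2.
Proof.
  intros ha hs t ht. set (m := rate_min).
  assert (hcx := fun t => proj1 (proj1 (proj2 hs) t)).
  assert (M : fst (g 0) ^ 2 * exp (-2 * m * 0) <= fst (g t) ^ 2 * exp (-2 * m * t)).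
  { apply (admissible_nondecreasing (fun s => fst (g s) ^ 2 * exp (-2 * m * s)) u (fun _ => True) ha); auto.
    - intros x. apply continuity_pt_mult.
      + apply continuity_pt_mult; [apply hcx|].
        apply continuity_pt_mult; [apply hcx|apply continuity_pt_const; intros ? ?; auto].
      + apply derivable_continuous_pt. apply derivable_pt_comp; [|apply derivable_pt_exp].
        apply derivable_pt_scal, derivable_pt_id.
    - intros x _ hl. destruct (solution_is_derive u p g x hs hl) as [hx _].
      eexists. split; [apply is_derive_Reals, (is_derive_sqr_exp _ _ (-2 * m) x hx)|].
      assert (W := rate_bounds (u x) (proj1 ha x)). fold m in W.
      assert (0 < exp (-2 * m * x)) by apply exp_pos.
      replace ((2 * (u x * al * fst (g x)) + -2 * m * fst (g x)) * fst (g x) * exp (-2 * m * x))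
        with (2 * (u x * al - m) * (fst (g x) * fst (g x) * exp (-2 * m * x))) by ring.
      apply Rmult_le_pos; [lra|]. apply Rmult_le_pos; [apply Rle_0_sqr|lra]. }
  destruct hs as [h0 _]. rewrite h0, Rmult_0_r, exp_0, Rmult_1_r in M.
  assert (E : exp (-2 * m * t) * exp (m * t) ^ 2 = 1).
  { simpl. rewrite Rmult_1_r, <- !exp_plus.
    replace (-2 * m * t + (m * t + m * t)) with 0 by ring. apply exp_0. }
  assert (0 < exp (-2 * m * t)) by apply exp_pos.
  apply Rmult_le_reg_r with (exp (-2 * m * t)); auto.
  replace ((fst p * exp (m * t)) ^ 2 * exp (-2 * m * t)) with (fst p ^ 2 * 1) by (rewrite <- E; ring).
  lra.
Qed.

Lemma fst_solution_lower_bound u p g : adm u -> sol u p g -> 0 < fst p ->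
  forall t, 0 <= t -> fst p * exp (rate_min * t) <= fst (g t) /\ 0 < fst (g t).
Proof.
  intros ha hs hp. assert (hsq := sqr_fst_solution_lower_bound u p g ha hs).
  assert (hpos : forall t, 0 <= t -> 0 < fst (g t)).
  { intros t ht. destruct (Rlt_or_le 0 (fst (g t))) as [h|h]; auto. exfalso.
    destruct (IVT_cor (fun s => fst (g s)) 0 t (fun t => proj1 (proj1 (proj2 hs) t)) ht) as [z [hz Ez]].
    { rewrite (proj1 hs). nra. }
    assert (Z := hsq z (proj1 hz)). rewrite Ez in Z.
    assert (0 < fst p * exp (rate_min * z)) by (apply Rmult_lt_0_compat; [lra|apply exp_pos]). nra. }
  intros t ht. split; [|apply hpos; auto].
  assert (Z := hsq t ht). assert (P := hpos t ht).
  assert (0 < fst p * exp (rate_min * t)) by (apply Rmult_lt_0_compat; [lra|apply exp_pos]).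
  nra.
Qed.

Definition affine_trace (c1 c2 c0 k de : R) (g : R -> pt) (s : R) : R :=
  affine_form c1 c2 c0 (g s) * exp (k * s) + de * s.

Definition affine_trace_rate (u : R -> R) (c1 c2 c0 k de : R) (g : R -> pt) (x : R) : R :=
  (c1 * (u x * al * fst (g x)) + c2 * (a * (fst (g x) - 1) + b * snd (g x) + u x * fst (g x) * be)
    + k * affine_form c1 c2 c0 (g x)) * exp (k * x) + de.

Lemma affine_trace_0 c1 c2 c0 k de g : affine_trace c1 c2 c0 k de g 0 = affine_form c1 c2 c0 (g 0).
Proof. unfold affine_trace. rewrite !Rmult_0_r, exp_0. ring. Qed.

Lemma continuity_pt_affine_trace u p g c1 c2 c0 k de : sol u p g ->
  forall t, continuity_pt (affine_trace c1 c2 c0 k de g) t.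
Proof.
  intros [_ [hc _]] t. destruct (hc t) as [cx cy]. unfold affine_trace, affine_form.
  assert (hk : forall c, continuity_pt (fun _ => c) t) by (intros c; apply continuity_pt_const;
    intros ? ?; auto).
  apply continuity_pt_plus.
  - apply continuity_pt_mult.
    + apply continuity_pt_plus; [apply continuity_pt_plus|]; auto; apply continuity_pt_mult; auto.
    + apply derivable_continuous_pt. apply derivable_pt_comp; [|apply derivable_pt_exp].
      apply derivable_pt_scal, derivable_pt_id.
  - apply continuity_pt_mult; auto. apply derivable_continuous_pt, derivable_pt_id.
Qed.

Lemma affine_trace_derivable u p g c1 c2 c0 k de x : sol u p g -> locally_const u x ->
  derivable_pt_lim (affine_trace c1 c2 c0 k de g) x (affine_trace_rate u c1 c2 c0 k de g x).
Proof.
  intros hs hl. destruct (solution_is_derive u p g x hs hl) as [hx hy].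
  apply is_derive_Reals. exact (is_derive_affine_exp _ _ _ _ c1 c2 c0 k de x hx hy).
Qed.

Lemma affine_trace_nondecreasing u p g c1 c2 c0 k de (P : R -> Prop) : adm u -> sol u p g ->
  (forall x, P x -> locally_const u x -> 0 <= affine_trace_rate u c1 c2 c0 k de g x) ->
  forall s t, s <= t -> (forall x, s < x < t -> P x) ->
  affine_trace c1 c2 c0 k de g s <= affine_trace c1 c2 c0 k de g t.
Proof.
  intros ha hs hd. apply (admissible_nondecreasing _ u P ha).
  - exact (continuity_pt_affine_trace u p g c1 c2 c0 k de hs).
  - intros x hP hl. eexists. split; [apply (affine_trace_derivable u p g); auto|]. auto.
Qed.

Lemma affine_trace_constant u p g c1 c2 c0 k de : adm u -> sol u p g ->
  (forall x, locally_const u x -> affine_trace_rate u c1 c2 c0 k de g x = 0) ->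
  forall t, affine_trace c1 c2 c0 k de g t = affine_form c1 c2 c0 p.
Proof.
  intros ha hs hd t. rewrite <- (proj1 hs), <- (affine_trace_0 c1 c2 c0 k de).
  apply (admissible_constant _ u ha).
  - exact (continuity_pt_affine_trace u p g c1 c2 c0 k de hs).
  - intros x hl. rewrite <- (hd x hl). apply (affine_trace_derivable u p g); auto.
Qed.

Lemma fst_solution_const u p g : al = 0 -> adm u -> sol u p g -> forall t, fst (g t) = fst p.
Proof.
  intros hal ha hs t.
  assert (H := affine_trace_constant u p g 1 0 0 0 0 ha hs
    ltac:(intros x _; unfold affine_trace_rate; rewrite hal; ring) t).
  unfold affine_trace, affine_form in H. rewrite !Rmult_0_l, exp_0 in H. lra.
Qed.

Lemma orbit_fst_const p r : al = 0 -> orbit p r -> fst r = fst p.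
Proof. intros hal [u [g [t [hu [hs [_ <-]]]]]]. apply (fst_solution_const u p g); auto. Qed.

Lemma pre_control_set_return (D : pt -> Prop) p : pre_cs D -> D p ->
  exists u g, adm u /\ sol u p g /\ inG (g 1) /\ adherent (orbit (g 1)) p.
Proof.
  intros [hG [hi hii]] hp. destruct (hi p hp) as [u [g [ha [hs hin]]]].
  assert (hq : D (g 1)) by (apply hin; lra).
  exists u, g. split; [exact ha|split; [exact hs|split; [apply hG;
    auto|exact (proj2 (hii (g 1) hq p hp))]]].
Qed.

(* A point [p] of a pre-control set adheres to the orbit of [g 1]; this is
   impossible if [Z] has strictly increased and can only increase further
   outside the closed absorbing set [Bad]. *)
Lemma pre_control_set_excludes (Good Bad : pt -> Prop) (Z : pt -> R) K :
  lipschitz Z K -> closed2 Bad ->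
  (forall u g p, adm u -> sol u p g -> inG p ->
     forall s t, 0 <= s <= t -> Bad (g s) -> Bad (g t)) ->
  (forall u g p t, adm u -> sol u p g -> inG p -> 0 <= t -> Good p ->
     (forall tau, 0 <= tau <= t -> ~ Bad (g tau)) -> Z p <= Z (g t)) ->
  (forall u g p, adm u -> sol u p g -> inG p -> Good p ->
     (forall tau, 0 <= tau <= 1 -> ~ Bad (g tau)) -> Z p < Z (g 1) /\ Good (g 1)) ->
  forall D, pre_cs D -> forall p, D p -> Good p -> ~ Bad p -> False.
Proof.
  intros hZ hB habs hmono hstrict D hD p hp hgood hbad.
  assert (hpG : inG p) by (apply (proj1 hD); auto).
  destruct (pre_control_set_return D p hD hp) as [u [g [ha [hs [hg1 hcl]]]]].
  destruct (classic (exists tau, 0 <= tau <= 1 /\ Bad (g tau))) as [[tau [ht hb]]|hn].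
  - apply hbad. apply (closed2_adherent Bad (orbit (g 1)) p hB); auto.
    intros r [u' [g' [t' [ha' [hs' [ht' <-]]]]]].
    apply (habs u' g' (g 1) ha' hs' hg1 0 t'); [lra|].
    rewrite (proj1 hs'). apply (habs u g p ha hs hpG tau 1); auto; lra.
  - assert (nb : forall tau, 0 <= tau <= 1 -> ~ Bad (g tau)) by (intros tau ht hb; apply hn; eauto).
    destruct (hstrict u g p ha hs hpG hgood nb) as [Hlt Hg1].
    assert (hB' := closed2_or Bad _ hB (closed2_ge Z K (Z (g 1)) hZ)).
    enough (H : Bad p \/ Z (g 1) <= Z p) by (destruct H; [tauto|lra]).
    apply (closed2_adherent _ (orbit (g 1)) p hB'); auto.
    intros r [u' [g' [t' [ha' [hs' [ht' <-]]]]]].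
    destruct (classic (exists tau, 0 <= tau <= t' /\ Bad (g' tau))) as [[tau [ht hb]]|hn'].
    + left. apply (habs u' g' (g 1) ha' hs' hg1 tau t'); auto; lra.
    + right. apply (hmono u' g' (g 1) t' ha' hs' hg1 ht' Hg1).
      intros tau ht hb. apply hn'. eauto.
Qed.

End System.

(** * Vertical lines *)

Lemma pre_control_set_fst_const a b be umin umax (D : pt -> Prop) p0 :
  pre_control_set a b 0 be umin umax D -> D p0 -> forall q, D q -> fst q = fst p0.
Proof.
  intros [_ [_ hii]] hp0 q hq.
  assert (hcl := proj2 (hii p0 hp0 q hq)).
  assert (orb : forall s, orbit_plus a b 0 be umin umax p0 s -> affine_form 1 0 0 s = fst p0)
    by (intros s hs; unfold affine_form;
      rewrite (orbit_fst_const a b 0 be umin umax p0 s eq_refl hs); lra).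
  assert (L := lipschitz_affine_form 1 0 0).
  assert (X1 := adherent_ge _ _ _ (fst p0) q L ltac:(intros s hs; rewrite (orb s hs); lra) hcl).
  assert (X2 := adherent_le _ _ _ (fst p0) q L ltac:(intros s hs; rewrite (orb s hs); lra) hcl).
  unfold affine_form in X1, X2. lra.
Qed.

Lemma vertical_line_control_set a be umin umax x up dn : 0 < x ->
  umin <= up <= umax -> umin <= dn <= umax ->
  0 < a * (x - 1) + up * x * be -> a * (x - 1) + dn * x * be < 0 ->
  is_control_set a 0 0 be umin umax (fun p => fst p = x).
Proof.
  intros hx hup hdn hr1 hr2.
  set (r := fun v => a * (x - 1) + v * x * be).
  change (0 < r up) in hr1. change (r dn < 0) in hr2.
  assert (flow : forall v y0, umin <= v <= umax -> forall t, 0 <= t ->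
           orbit_plus a 0 0 be umin umax (x, y0) (x, y0 + r v * t)).
  { intros v y0 hv t ht.
    apply (const_control_orbit a 0 0 be umin umax v (x, y0) (fun _ => x) (fun t => y0 + r v * t));
      auto; try (simpl; ring); intros s; unfold r; auto_derive; auto; ring. }
  assert (reach : forall y0 y1 v, umin <= v <= umax -> r v <> 0 -> 0 <= (y1 - y0) / r v ->
           orbit_plus a 0 0 be umin umax (x, y0) (x, y1)).
  { intros y0 y1 v hv hrv ht. assert (F := flow v y0 hv _ ht).
    replace (y0 + r v * ((y1 - y0) / r v)) with y1 in F by (field; auto). exact F. }
  split; [split; [|split]|].
  - intros p hp. unfold inG. lra.
  - intros [px py] hp. simpl in hp. subst px.
    destruct (const_control_solution a 0 0 be umin umax up (x, py) (fun _ => x) (fun t => py + r up * t))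
      as [A S]; [auto|reflexivity|simpl; ring|intros t; auto_derive; auto; ring
                 |intros t; unfold r; auto_derive; auto; ring|].
    exists (fun _ => up), (fun t => (x, py + r up * t)). auto.
  - intros [px py] hp [qx qy] hq. simpl in hp, hq. subst px qx.
    apply orbit_plus_closure; [|unfold inG; simpl; lra].
    destruct (Rle_or_lt py qy) as [h|h].
    + apply (reach py qy up hup); [lra|]. apply Rdiv_le_0_compat; lra.
    + apply (reach py qy dn hdn); [lra|].
      replace ((qy - py) / r dn) with ((py - qy) / - r dn) by (field; lra).
      apply Rdiv_le_0_compat; lra.
  - intros D hD hsub q hq. apply (pre_control_set_fst_const a 0 be umin umax D (x, 0)); auto.
Qed.

Lemma vertical_drift_signs a be umin umax : umin < 0 -> 0 < umax -> be <> 0 ->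
  exists eps, 0 < eps /\ forall x, 1 - eps < x < 1 + eps ->
    0 < x /\ exists up dn, umin <= up <= umax /\ umin <= dn <= umax /\
      0 < a * (x - 1) + up * x * be /\ a * (x - 1) + dn * x * be < 0.
Proof.
  intros humin humax hbe.
  assert (hM := rate_max_pos be umin umax humin humax hbe).
  assert (hm := rate_min_neg be umin umax humin humax hbe).
  destruct (exists_control_rate be umin umax humin humax hbe (rate_max be umin umax))
    as [up [hup Eup]]; [lra|].
  destruct (exists_control_rate be umin umax humin humax hbe (rate_min be umin umax))
    as [dn [hdn Edn]]; [lra|].
  set (mu := Rmin (up * be) (- (dn * be))).
  assert (hmu : 0 < mu) by (unfold mu; apply Rmin_pos; lra).
  assert (mu <= up * be) by apply Rmin_l. assert (mu <= - (dn * be)) by apply Rmin_r.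
  set (k := Rabs (a + up * be) + Rabs (a + dn * be) + 1).
  assert (hk1 : Rabs (a + up * be) <= k - 1) by (unfold k;
    assert (0 <= Rabs (a + dn * be)) by apply Rabs_pos; lra).
  assert (hk2 : Rabs (a + dn * be) <= k - 1) by (unfold k;
    assert (0 <= Rabs (a + up * be)) by apply Rabs_pos; lra).
  assert (hk : 0 < k) by (assert (0 <= Rabs (a + up * be)) by apply Rabs_pos; lra).
  set (eps := Rmin 1 (mu / k)).
  assert (he1 : eps <= 1) by apply Rmin_l. assert (he2 : eps <= mu / k) by apply Rmin_r.
  assert (hkeps : k * eps <= mu) by (apply (Rmult_le_reg_r (/ k)); [apply Rinv_0_lt_compat; lra|];
    replace (k * eps * / k) with eps by (field; lra); exact he2).
  exists eps. split; [apply Rmin_pos; [lra|apply Rdiv_lt_0_compat; lra]|].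
  intros x hx. split; [lra|]. exists up, dn. split; [auto|split; [auto|]].
  assert (hd : forall v, Rabs ((a + v * be) * (x - 1)) <= (k - 1) * eps -> Rabs (a + v * be) <= k - 1 ->
     Rabs (a * (x - 1) + v * x * be - v * be) < mu).
  { intros v h1 h2. replace (a * (x - 1) + v * x * be - v * be)
    with ((a + v * be) * (x - 1)) by ring. nra. }
  assert (hx1 : Rabs (x - 1) <= eps) by (apply Rabs_le; lra).
  assert (B : forall v, Rabs (a + v * be) <= k - 1 -> Rabs ((a + v * be) * (x - 1)) <= (k - 1) * eps).
  { intros v hv. rewrite Rabs_mult. apply Rmult_le_compat; auto using Rabs_pos. }
  assert (X1 := hd up (B up hk1) hk1). assert (X2 := hd dn (B dn hk2) hk2).
  apply Rabs_def2 in X1. apply Rabs_def2 in X2. split; lra.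
Qed.

Lemma control_sets_vertical_lines a b al be umin umax :
  umin < 0 -> 0 < umax -> al <> 0 \/ be <> 0 -> al = 0 -> a * al + b * be = 0 ->
  exists eps, 0 < eps /\ forall x, 1 - eps < x < 1 + eps ->
    is_control_set a b al be umin umax (fun p => fst p = x).
Proof.
  intros humin humax halbe hal hc. subst al.
  assert (hbe : be <> 0) by (destruct halbe; [lra|auto]).
  assert (hb : b = 0) by (rewrite Rmult_0_r, Rplus_0_l in hc; destruct (Rmult_integral _ _ hc); tauto).
  subst b. destruct (vertical_drift_signs a be umin umax humin humax hbe) as [eps [heps H]].
  exists eps. split; auto. intros x hx.
  destruct (H x hx) as [hx0 [up [dn [hup [hdn [h1 h2]]]]]].
  apply (vertical_line_control_set a be umin umax x up dn); auto.
Qed.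

(** * Vertical segments *)

Lemma sandwiched_interval (I : R -> Prop) lo hi y0 : lo < y0 < hi ->
  (forall y, lo < y < hi -> I y) -> (forall y, I y -> lo <= y <= hi) ->
  is_interval I /\ (exists M, forall y, I y -> Rabs y <= M) /\
  (exists y0 r, 0 < r /\ forall y, Rabs (y - y0) < r -> I y) /\ I y0.
Proof.
  intros hy0 hin hout. split; [|split; [|split]].
  - intros y1 y2 y h1 h2 hy. destruct (Req_dec y y1) as [->|n1]; auto.
    destruct (Req_dec y y2) as [->|n2]; auto.
    apply hin. apply hout in h1. apply hout in h2. lra.
  - exists (Rabs lo + Rabs hi). intros y hy. apply hout in hy.
    unfold Rabs. repeat destruct Rcase_abs; lra.
  - exists ((lo + hi) / 2), ((hi - lo) / 2). split; [lra|].
    intros y hy. apply Rabs_def2 in hy. apply hin. lra.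
  - apply hin; auto.
Qed.

Lemma exists_exp_decay b D e : b < 0 -> 0 < e -> exists t, 0 <= t /\ Rabs D * exp (b * t) < e.
Proof.
  intros hb he. assert (hD : 0 <= Rabs D) by apply Rabs_pos.
  set (c := e / (Rabs D + 1)). assert (hc : 0 < c) by (apply Rdiv_lt_0_compat; lra).
  exists (Rmax 0 (ln c / b)). split; [apply Rmax_l|].
  assert (hbt : b * Rmax 0 (ln c / b) <= ln c).
  { assert (ln c / b <= Rmax 0 (ln c / b)) by apply Rmax_r.
    replace (ln c) with (b * (ln c / b)) at 2 by (field; lra). nra. }
  assert (hexp : exp (b * Rmax 0 (ln c / b)) <= c).
  { rewrite <- (exp_ln c) at 2 by auto. apply exp_le_compat; auto. }
  assert (Rabs D * exp (b * Rmax 0 (ln c / b)) <= Rabs D * c) by (apply Rmult_le_compat_l; auto).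
  assert (Rabs D * c < e) by (unfold c; apply Rmult_lt_reg_r with (Rabs D + 1); [lra|];
    field_simplify; nra).
  lra.
Qed.

Section VerticalSegments.

Variables a b be umin umax x0 : R.
Hypotheses (humin : umin < 0) (humax : 0 < umax) (hb : b <> 0) (hbe : be <> 0) (hx0 : 0 < x0).

Local Notation orbit := (orbit_plus a b 0 be umin umax).
Local Notation pre_cs := (pre_control_set a b 0 be umin umax).

Definition equilibrium (v : R) : R := - (a * (x0 - 1) + v * x0 * be) / b.

Definition equilibrium_lo : R := Rmin (equilibrium umin) (equilibrium umax).
Definition equilibrium_hi : R := Rmax (equilibrium umin) (equilibrium umax).

Local Notation elo := equilibrium_lo.
Local Notation ehi := equilibrium_hi.

Let slope := - x0 * be / b.

Lemma slope_neq_0 : slope <> 0.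
Proof.
  unfold slope, Rdiv. repeat apply Rmult_integral_contrapositive_currified;
    try apply Rinv_neq_0_compat; lra.
Qed.

Lemma equilibrium_affine v : equilibrium v = equilibrium umin + slope * (v - umin).
Proof. unfold equilibrium, slope. field. auto. Qed.

Lemma equilibrium_extremes :
  (0 < slope -> elo = equilibrium umin /\ ehi = equilibrium umax) /\
  (slope < 0 -> elo = equilibrium umax /\ ehi = equilibrium umin).
Proof.
  unfold equilibrium_lo, equilibrium_hi. rewrite (equilibrium_affine umax).
  split; intros hk; [rewrite Rmin_left, Rmax_right by nra|rewrite Rmin_right, Rmax_left by nra]; auto.
Qed.

Lemma equilibrium_range v : umin <= v <= umax -> elo <= equilibrium v <= ehi.
Proof.
  intros hv. destruct equilibrium_extremes as [E1 E2]. rewrite (equilibrium_affine v).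
  destruct (Rtotal_order slope 0) as [hk|[hk|hk]]; [|destruct slope_neq_0; auto|].
  - destruct (E2 hk) as [-> ->]. rewrite (equilibrium_affine umax). split; nra.
  - destruct (E1 hk) as [-> ->]. rewrite (equilibrium_affine umax). split; nra.
Qed.

Lemma equilibrium_onto y : elo <= y <= ehi -> exists v, umin <= v <= umax /\ equilibrium v = y.
Proof.
  intros hy. assert (hk := slope_neq_0). destruct equilibrium_extremes as [E1 E2].
  exists (umin + (y - equilibrium umin) / slope).
  split; [|rewrite equilibrium_affine; field; auto].
  set (s := (y - equilibrium umin) / slope).
  assert (hs : slope * s = y - equilibrium umin) by (unfold s; field; auto).
  destruct (Rtotal_order slope 0) as [h|[h|h]]; [|contradiction|].
  - destruct (E2 h) as [e1 e2]. rewrite e1, e2, (equilibrium_affine umax) in hy. split; nra.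
  - destruct (E1 h) as [e1 e2]. rewrite e1, e2, (equilibrium_affine umax) in hy. split; nra.
Qed.

Lemma equilibrium_0_inside : elo < equilibrium 0 < ehi.
Proof.
  assert (hk := slope_neq_0). destruct equilibrium_extremes as [E1 E2].
  rewrite (equilibrium_affine 0).
  destruct (Rtotal_order slope 0) as [h|[h|h]]; [|contradiction|].
  - destruct (E2 h) as [-> ->]. rewrite (equilibrium_affine umax). split; nra.
  - destruct (E1 h) as [-> ->]. rewrite (equilibrium_affine umax). split; nra.
Qed.

Lemma equilibrium_flow v y0 : umin <= v <= umax ->
  admissible umin umax (fun _ => v) /\
  is_solution a b 0 be (fun _ => v) (x0, y0) (fun t => (x0, equilibrium v + (y0 - equilibrium v) * exp (b * t))).
Proof.
  intros hv. apply const_control_solution; auto.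
  - simpl. rewrite Rmult_0_r, exp_0. ring.
  - intros t. auto_derive; auto. ring.
  - intros t. unfold equilibrium. auto_derive; auto. field. auto.
Qed.

Lemma equilibrium_flow_orbit v y0 t : umin <= v <= umax -> 0 <= t ->
  orbit (x0, y0) (x0, equilibrium v + (y0 - equilibrium v) * exp (b * t)).
Proof.
  intros hv ht. destruct (equilibrium_flow v y0 hv) as [A S].
  eexists _, _, t. split; [exact A|split; [exact S|split; [lra|reflexivity]]].
Qed.

(* [(y - c) e^(-bt)] has derivative [b (c - equilibrium u) e^(-bt)]. *)
Lemma half_line_invariant sg c p r :
  (forall v, umin <= v <= umax -> 0 <= sg * b * (c - equilibrium v)) ->
  fst p = x0 -> 0 <= sg * (snd p - c) -> orbit p r -> 0 <= sg * (snd r - c).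
Proof.
  intros hv hp hpc [u [g [t [hu [hs [ht <-]]]]]].
  assert (hx := fst_solution_const a b 0 be umin umax u p g eq_refl hu hs).
  assert (hrate : forall s, affine_trace_rate a b 0 be u 0 sg (- sg * c) (- b) 0 g s
                            = sg * b * (c - equilibrium (u s)) * exp (- b * s)).
  { intros s. unfold affine_trace_rate, affine_form, equilibrium. rewrite hx, hp. field. auto. }
  assert (M0t := affine_trace_nondecreasing a b 0 be umin umax u p g 0 sg (- sg * c) (- b) 0
    (fun _ => True) hu hs ltac:(intros s _ _; rewrite hrate; apply Rmult_le_pos;
      [apply hv, (proj1 hu)|apply Rlt_le, exp_pos]) 0 t ht ltac:(intros; exact I)).
  rewrite affine_trace_0, (proj1 hs) in M0t. unfold affine_trace, affine_form in M0t.
  assert (0 < exp (- b * t)) by apply exp_pos. nra.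
Qed.

Lemma adherent_half_line sg c p q :
  (forall v, umin <= v <= umax -> 0 <= sg * b * (c - equilibrium v)) ->
  fst p = x0 -> 0 <= sg * (snd p - c) -> adherent (orbit p) q -> 0 <= sg * (snd q - c).
Proof.
  intros hv hp hpc hq.
  assert (X := adherent_ge (affine_form 0 sg (- sg * c)) _ (orbit p) 0 q (lipschitz_affine_form 0 sg (- sg * c))
    ltac:(intros s hs; unfold affine_form; replace (0 * fst s + sg * snd s + - sg * c)
      with (sg * (snd s - c)) by ring;
      apply (half_line_invariant sg c p s); auto) hq).
  unfold affine_form in X. lra.
Qed.

Lemma equilibrium_rest y : elo <= y <= ehi ->
  exists u g, admissible umin umax u /\ is_solution a b 0 be u (x0, y) g /\ forall t, g t = (x0, y).
Proof.
  intros hy. destruct (equilibrium_onto y hy) as [v [hv ev]].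
  destruct (equilibrium_flow v y hv) as [A S]. eexists _, _. split; [exact A|split; [exact S|]].
  intros t. rewrite ev. f_equal. ring.
Qed.

Lemma closed_segment_pre_control_set : b < 0 -> pre_cs (fun p => fst p = x0 /\ elo <= snd p <= ehi).
Proof.
  intros hbn. split; [|split].
  - intros p [hp _]. unfold inG. lra.
  - intros [px py] [hp hy]. simpl in hp, hy. subst px.
    destruct (equilibrium_rest py hy) as [u [g [A [S E]]]].
    exists u, g. split; [exact A|split; [exact S|]]. intros t _. rewrite E. simpl. auto.
  - intros [px py] [hp hy] [qx qy] [hq hqy]. simpl in *. subst px qx. split; [unfold inG; simpl; lra|].
    intros e he. destruct (equilibrium_onto qy hqy) as [v [hv ev]].
    destruct (exists_exp_decay b (py - qy) e hbn he) as [t [ht hd]].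
    exists (x0, equilibrium v + (py - equilibrium v) * exp (b * t)).
    split; [apply equilibrium_flow_orbit; auto|].
    rewrite dist2_vert, ev. replace (qy + (py - qy) * exp (b * t) - qy)
      with ((py - qy) * exp (b * t)) by ring.
    rewrite Rabs_mult, (Rabs_right (exp (b * t))) by (left; apply exp_pos). exact hd.
Qed.

Lemma closed_segment_maximal : b < 0 -> forall D, pre_cs D ->
  (forall p, fst p = x0 /\ elo <= snd p <= ehi -> D p) ->
  forall q, D q -> fst q = x0 /\ elo <= snd q <= ehi.
Proof.
  intros hbn D hD hsub q hq. set (p0 := (x0, equilibrium 0)).
  assert (h0 := equilibrium_0_inside).
  assert (hp0 : D p0) by (apply hsub; simpl; split; [auto|lra]).
  split; [apply (pre_control_set_fst_const a b be umin umax D p0); auto|].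
  assert (hcl := proj2 (proj2 (proj2 hD) p0 hp0 q hq)).
  assert (L := adherent_half_line 1 elo p0 q
    ltac:(intros v hv; assert (H := equilibrium_range v hv); nra) eq_refl ltac:(simpl; lra) hcl).
  assert (U := adherent_half_line (-1) ehi p0 q
    ltac:(intros v hv; assert (H := equilibrium_range v hv); nra) eq_refl ltac:(simpl; lra) hcl).
  lra.
Qed.

Lemma equilibrium_reach v py qy : 0 < b -> umin <= v <= umax ->
  1 <= (qy - equilibrium v) / (py - equilibrium v) -> orbit (x0, py) (x0, qy).
Proof.
  intros hbp hv hR. set (R0 := (qy - equilibrium v) / (py - equilibrium v)) in *.
  assert (hne : py - equilibrium v <> 0)
    by (intro e; unfold R0 in hR; rewrite e in hR; unfold Rdiv in hR;
      rewrite Rinv_0, Rmult_0_r in hR; lra).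
  assert (hl : 0 <= ln R0) by (rewrite <- ln_1; apply ln_le; lra).
  assert (F := equilibrium_flow_orbit v py (ln R0 / b) hv ltac:(apply Rdiv_le_0_compat; lra)).
  replace (b * (ln R0 / b)) with (ln R0) in F by (field; lra). rewrite exp_ln in F by lra.
  unfold R0 in F. replace (equilibrium v + (py - equilibrium v) * ((qy - equilibrium v) / (py - equilibrium v)))
    with qy in F by (field; auto). exact F.
Qed.

Lemma open_segment_pre_control_set : 0 < b -> pre_cs (fun p => fst p = x0 /\ elo < snd p < ehi).
Proof.
  intros hbp. split; [|split].
  - intros p [hp _]. unfold inG. lra.
  - intros [px py] [hp hy]. simpl in hp, hy. subst px.
    destruct (equilibrium_rest py ltac:(lra)) as [u [g [A [S E]]]].
    exists u, g. split; [exact A|split; [exact S|]]. intros t _. rewrite E. simpl. auto.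
  - intros [px py] [hp hy] [qx qy] [hq hqy]. simpl in *. subst px qx.
    apply orbit_plus_closure; [|unfold inG; simpl; lra].
    destruct (Rle_or_lt py qy) as [h|h].
    + destruct (equilibrium_onto elo ltac:(lra)) as [v [hv ev]].
      apply (equilibrium_reach v); auto. rewrite ev.
      apply (Rmult_le_reg_r (py - elo)); [lra|]. field_simplify; lra.
    + destruct (equilibrium_onto ehi ltac:(lra)) as [v [hv ev]].
      apply (equilibrium_reach v); auto. rewrite ev.
      replace ((qy - ehi) / (py - ehi)) with ((ehi - qy) / (ehi - py)) by (field; lra).
      apply (Rmult_le_reg_r (ehi - py)); [lra|]. field_simplify; lra.
Qed.

Lemma open_segment_maximal : 0 < b -> forall D, pre_cs D ->
  (forall p, fst p = x0 /\ elo < snd p < ehi -> D p) ->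
  forall q, D q -> fst q = x0 /\ elo < snd q < ehi.
Proof.
  intros hbp D hD hsub q hq. set (p0 := (x0, equilibrium 0)).
  assert (h0 := equilibrium_0_inside).
  assert (hp0 : D p0) by (apply hsub; simpl; split; [auto|lra]).
  assert (hqx : fst q = x0) by (apply (pre_control_set_fst_const a b be umin umax D p0); auto).
  split; [auto|].
  assert (hcl := proj2 (proj2 (proj2 hD) q hq p0 hp0)).
  split; apply Rnot_le_lt; intros hy.
  - assert (L := adherent_half_line (-1) elo q p0
      ltac:(intros v hv; assert (H := equilibrium_range v hv); nra) hqx ltac:(lra) hcl).
    simpl in L. lra.
  - assert (U := adherent_half_line 1 ehi q p0
      ltac:(intros v hv; assert (H := equilibrium_range v hv); nra) hqx ltac:(lra) hcl).
    simpl in U. lra.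
Qed.

Lemma vertical_segment_control_set : exists I : R -> Prop,
  is_interval I /\ (exists M, forall y, I y -> Rabs y <= M) /\
  (exists y0 r, 0 < r /\ forall y, Rabs (y - y0) < r -> I y) /\ I (equilibrium 0) /\
  is_control_set a b 0 be umin umax (fun p => fst p = x0 /\ I (snd p)).
Proof.
  assert (h0 := equilibrium_0_inside).
  destruct (Rlt_or_le b 0) as [hbn|hbp].
  - exists (fun y => elo <= y <= ehi).
    destruct (sandwiched_interval (fun y => elo <= y <= ehi) elo ehi (equilibrium 0)) as [? [? [? ?]]];
      auto; try (intros; lra).
    split; [|split; [|split; [|split]]]; auto.
    split; [apply closed_segment_pre_control_set;
      auto|]. intros D hD hsub. apply closed_segment_maximal; auto.
  - assert (hbp' : 0 < b) by lra.
    exists (fun y => elo < y < ehi).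
    destruct (sandwiched_interval (fun y => elo < y < ehi) elo ehi (equilibrium 0)) as [? [? [? ?]]];
      auto; try (intros; lra).
    split; [|split; [|split; [|split]]]; auto.
    split; [apply open_segment_pre_control_set;
      auto|]. intros D hD hsub. apply open_segment_maximal; auto.
Qed.

End VerticalSegments.

Lemma control_sets_vertical_segments a b al be umin umax : umin < 0 -> 0 < umax ->
  al = 0 -> a * al + b * be <> 0 ->
  forall x, 0 < x -> exists I : R -> Prop,
    is_interval I /\ (exists M, forall y, I y -> Rabs y <= M) /\
    (exists y0 r, 0 < r /\ forall y, Rabs (y - y0) < r -> I y) /\ I (- a / b * (x - 1)) /\
    is_control_set a b al be umin umax (fun p => fst p = x /\ I (snd p)).
Proof.
  intros humin humax hal hc x hx. subst al. rewrite Rmult_0_r, Rplus_0_l in hc.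
  assert (hb : b <> 0) by (intro e; apply hc; rewrite e; ring).
  assert (hbe : be <> 0) by (intro e; apply hc; rewrite e; ring).
  replace (- a / b * (x - 1)) with (equilibrium a b be x 0) by (unfold equilibrium; field; auto).
  apply vertical_segment_control_set; auto.
Qed.

(** * The invariant line *)

Lemma mul_exp_le b s t : s <= t -> b * exp (b * s) <= b * exp (b * t).
Proof.
  intros hst. destruct (Rle_or_lt 0 b).
  - apply Rmult_le_compat_l; auto. apply exp_le_compat. nra.
  - assert (exp (b * t) <= exp (b * s)) by (apply exp_le_compat; nra). nra.
Qed.

Lemma mul_exp_lt b s t : b <> 0 -> s < t -> b * exp (b * s) < b * exp (b * t).
Proof.
  intros hb hst. destruct (Rlt_or_le 0 b).
  - apply Rmult_lt_compat_l; auto. apply exp_increasing. nra.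
  - assert (b < 0) by lra. assert (exp (b * t) < exp (b * s)) by (apply exp_increasing; nra). nra.
Qed.

Section InvariantLine.

Variables a b al be umin umax : R.
Hypotheses (humin : umin < 0) (humax : 0 < umax) (hal : al <> 0) (hb : b <> 0)
  (hc : a * al + b * be = 0).

Local Notation orbit := (orbit_plus a b al be umin umax).
Local Notation pre_cs := (pre_control_set a b al be umin umax).

Definition line_coordinate : pt -> R := affine_form (- (be / al)) 1 (be / al).

Lemma line_coordinate_evolution u p g : admissible umin umax u -> is_solution a b al be u p g ->
  forall t, line_coordinate (g t) = line_coordinate p * exp (b * t).
Proof.
  intros hu hs t.
  assert (K := affine_trace_constant a b al be umin umax u p g (- (be / al)) 1 (be / al) (- b) 0 hu hs
    ltac:(intros x _; unfold affine_trace_rate, affine_form;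
          replace a with (- (b * be) / al) by (field_simplify_eq; lra); field; auto) t).
  unfold affine_trace in K. fold line_coordinate in K. rewrite Rmult_0_l, Rplus_0_r in K.
  rewrite <- K, Rmult_assoc, <- exp_plus. replace (- b * t + b * t) with 0 by ring.
  rewrite exp_0. ring.
Qed.

Lemma line_flow_orbit p v t : umin <= v <= umax -> line_coordinate p = 0 -> 0 <= t ->
  orbit p (fst p * exp (v * al * t), be / al * (fst p * exp (v * al * t) - 1)).
Proof.
  intros hv hp ht. unfold line_coordinate, affine_form in hp.
  apply (const_control_orbit a b al be umin umax v p (fun t => fst p * exp (v * al * t))
           (fun t => be / al * (fst p * exp (v * al * t) - 1))); auto.
  - simpl. rewrite Rmult_0_r, exp_0. ring.
  - simpl. rewrite Rmult_0_r, exp_0, Rmult_1_r. lra.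
  - intros s. auto_derive; auto. ring.
  - intros s. auto_derive; auto. replace a with (- (b * be) / al) by (field_simplify_eq;
    lra). field. auto.
Qed.

Let on_line (p : pt) : Prop := 0 < fst p /\ snd p = be / al * (fst p - 1).

Lemma on_line_coordinate p : on_line p -> line_coordinate p = 0.
Proof. intros [_ hp]. unfold line_coordinate, affine_form. rewrite hp. ring. Qed.

Lemma line_controllable p q : on_line p -> on_line q -> orbit p q.
Proof.
  intros hp hq. destruct (exists_rate_time al umin umax humin humax hal (ln (fst q / fst p)))
    as [v [t [hv [_ [ht E]]]]].
  assert (F := line_flow_orbit p v t hv (on_line_coordinate p hp) ht).
  rewrite E, exp_ln in F by (apply Rdiv_lt_0_compat; [apply hq|apply hp]).
  replace (fst p * (fst q / fst p)) with (fst q) in F by (field; destruct hp; lra).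
  destruct hq as [_ hq]. rewrite <- hq in F. destruct q. exact F.
Qed.

Lemma line_pre_control_set : pre_cs on_line.
Proof.
  split; [|split].
  - intros p [h _]. exact h.
  - intros p hp. destruct (const_control_solution a b al be umin umax 0 p (fun _ => fst p) (fun _ => snd p))
      as [A S]; [lra|reflexivity|reflexivity|intros t; auto_derive; auto; ring| |].
    + intros t. auto_derive; auto. destruct hp as [_ ->].
      replace a with (- (b * be) / al) by (field_simplify_eq; lra). field. auto.
    + exists (fun _ => 0), (fun _ => (fst p, snd p)). split; [exact A|split; [exact S|]].
      intros t _. destruct p. exact hp.
  - intros p hp q hq. apply orbit_plus_closure; [apply line_controllable; auto|apply hq].
Qed.

(* [z] is multiplied by [e^(bt)] along trajectories, so [b z(p) z] increases
   and [p] cannot recur unless [z(p) = 0]. *)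
Lemma line_maximal D : pre_cs D -> forall p, D p -> on_line p.
Proof.
  intros hD p hp. split; [apply (proj1 hD); auto|].
  destruct (pre_control_set_return a b al be umin umax D p hD hp) as [u [g [hu [hs [_ hcl]]]]].
  set (z := line_coordinate p).
  assert (hgrow : forall r, orbit (g 1) r -> z * z * (b * exp (b * 1)) <= b * z * line_coordinate r).
  { intros r [u' [g' [t' [hu' [hs' [ht' <-]]]]]].
    rewrite (line_coordinate_evolution u' (g 1) g' hu' hs'), (line_coordinate_evolution u p g hu hs).
    fold z. replace (b * z * (z * exp (b * 1) * exp (b * t'))) with (z * z * (b * exp (b * (1 + t'))))
      by (rewrite Rmult_plus_distr_l, exp_plus; ring).
    apply Rmult_le_compat_l; [apply Rle_0_sqr|apply mul_exp_le; lra]. }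
  assert (X := adherent_ge (fun r => b * z * line_coordinate r) _ (orbit (g 1)) _ p
    (lipschitz_scale_affine (b * z) _ _ _) hgrow hcl).
  assert (S := mul_exp_lt b 0 1 hb Rlt_0_1). rewrite Rmult_0_r, exp_0 in S.
  cbv beta in X. fold z in X.
  assert (hw : 0 < b * exp (b * 1) - b * 1) by lra.
  assert (hzz : z * z <= 0) by (apply (Rmult_le_reg_r _ _ _ hw); lra).
  assert (hz' : z = 0) by nra.
  unfold z, line_coordinate, affine_form in hz'. lra.
Qed.

Lemma invariant_line_control_set :
  is_control_set a b al be umin umax on_line
    /\ forall C, is_control_set a b al be umin umax C -> set_eq C on_line.
Proof. exact (control_set_of_maximum a b al be umin umax on_line line_pre_control_set line_maximal). Qed.

End InvariantLine.

Lemma control_set_invariant_line a b al be umin umax : umin < 0 -> 0 < umax ->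
  a <> 0 \/ b <> 0 -> al <> 0 -> a * al + b * be = 0 ->
  let L := fun p : pt => 0 < fst p /\ snd p = be / al * (fst p - 1) in
  is_control_set a b al be umin umax L /\ forall C, is_control_set a b al be umin umax C -> set_eq C L.
Proof.
  intros humin humax hab hal hc L.
  assert (hb : b <> 0).
  { intros ->. rewrite Rmult_0_l, Rplus_0_r in hc.
    apply Rmult_integral in hc as [|]; destruct hab; auto. }
  exact (invariant_line_control_set a b al be umin umax humin humax hal hb hc).
Qed.

(** * The whole group *)

Section WholeGroup.

Variables a al be umin umax : R.
Hypotheses (humin : umin < 0) (humax : 0 < umax) (hal : al <> 0) (ha : a <> 0).

Local Notation orbit := (orbit_plus a 0 al be umin umax).

Lemma rest_drift x y t : 0 <= t -> orbit (x, y) (x, y + a * (x - 1) * t).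
Proof.
  intros ht. apply (const_control_orbit a 0 al be umin umax 0 (x, y) (fun _ => x) (fun t => y + a * (x - 1) * t));
    auto; try lra; try (simpl; ring); intros s; auto_derive; auto; ring.
Qed.

Lemma fst_transfer xs xe : 0 < xs -> 0 < xe -> exists d, forall y, orbit (xs, y) (xe, y + d).
Proof.
  intros hs he. destruct (exists_rate_time al umin umax humin humax hal (ln (xe / xs)))
    as [v [t [hv [hw [ht E]]]]].
  set (w := v * al) in *.
  exists ((a + v * be) * xs * (xe / xs - 1) / w - a * t). intros y.
  assert (F := const_control_orbit a 0 al be umin umax v (xs, y) (fun s => xs * exp (w * s))
    (fun s => y + ((a + v * be) * xs * (exp (w * s) - 1) / w - a * s)) hv
    ltac:(simpl; rewrite Rmult_0_r, exp_0; ring) ltac:(simpl; rewrite Rmult_0_r, exp_0; field; auto)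
    ltac:(intros s; unfold w; auto_derive; auto; ring)
    ltac:(intros s; unfold w; auto_derive; auto; field; split; intro e; apply hw; unfold w;
      rewrite e; ring)
    t ht).
  cbv beta in F. rewrite E, exp_ln in F by (apply Rdiv_lt_0_compat; auto).
  replace (xs * (xe / xs)) with xe in F by (field; lra). exact F.
Qed.

(* Waiting at [x = 2] raises [y] at rate [a], waiting at [x = 1/2] lowers it at rate [a/2]. *)
Lemma inG_controllable p q : inG p -> inG q -> orbit p q.
Proof.
  destruct p as [x0 y0], q as [x1 y1]. unfold inG. simpl. intros hp hq.
  destruct (fst_transfer x0 2 hp ltac:(lra)) as [d1 H1].
  destruct (fst_transfer 2 (1/2) ltac:(lra) ltac:(lra)) as [d2 H2].
  destruct (fst_transfer (1/2) x1 ltac:(lra) hq) as [d3 H3].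
  set (l := y1 - y0 - d1 - d2 - d3).
  assert (gen : forall t1 t2, 0 <= t1 -> 0 <= t2 -> a * t1 - a / 2 * t2 = l -> orbit (x0, y0) (x1, y1)).
  { intros t1 t2 h1 h2 e.
    eapply orbit_plus_trans; [apply (H1 y0)|].
    eapply orbit_plus_trans; [apply (rest_drift 2 (y0 + d1) t1 h1)|].
    eapply orbit_plus_trans; [apply H2|].
    eapply orbit_plus_trans; [apply (rest_drift (1/2) _ t2 h2)|].
    replace y1 with (y0 + d1 + a * (2 - 1) * t1 + d2 + a * (1 / 2 - 1) * t2 + d3) by (unfold l in e; lra).
    apply H3. }
  assert (haa : 0 < a * a) by (apply Rsqr_pos_lt; auto).
  destruct (Rle_or_lt 0 (a * l)) as [h|h].
  - apply (gen (l / a) 0); [|lra|field; auto].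
    replace (l / a) with (a * l / (a * a)) by (field; auto). apply Rdiv_le_0_compat; lra.
  - apply (gen 0 (- 2 * l / a)); [lra| |field; auto].
    replace (- 2 * l / a) with (- 2 * (a * l) / (a * a)) by (field; auto). apply Rdiv_le_0_compat; lra.
Qed.

Lemma whole_group_control_set :
  is_control_set a 0 al be umin umax inG
    /\ forall C, is_control_set a 0 al be umin umax C -> set_eq C inG.
Proof.
  apply control_set_of_maximum; [split; [|split]|].
  - auto.
  - intros [x0 y0] hp. unfold inG in hp. simpl in hp.
    destruct (const_control_solution a 0 al be umin umax 0 (x0, y0) (fun _ => x0) (fun t => y0 + a * (x0 - 1) * t))
      as [A S]; [lra|reflexivity|simpl; ring|intros s; auto_derive; auto; ring|intros s;
        auto_derive; auto; ring|].
    exists (fun _ => 0), (fun t => (x0, y0 + a * (x0 - 1) * t)). split; [exact A|split; [exact S|]].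
    intros t _. exact hp.
  - intros p hp q hq. apply orbit_plus_closure; auto. apply inG_controllable; auto.
  - intros D [hG _] p hp. auto.
Qed.

End WholeGroup.

Lemma control_set_whole_group a b al be umin umax : umin < 0 -> 0 < umax ->
  al * (a * al + b * be) <> 0 -> b = 0 ->
  is_control_set a b al be umin umax inG
    /\ forall C, is_control_set a b al be umin umax C -> set_eq C inG.
Proof.
  intros humin humax hc hb. subst b.
  apply whole_group_control_set; auto; intro e; apply hc; rewrite e; ring.
Qed.

(** * The cone *)

Section Cone.

Variables a b al be umin umax : R.
Hypotheses (humin : umin < 0) (humax : 0 < umax) (hal : al <> 0) (hb : b <> 0)
  (hc : a * al + b * be <> 0).

Local Notation sol := (is_solution a b al be).
Local Notation adm := (admissible umin umax).
Local Notation orbit := (orbit_plus a b al be umin umax).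
Local Notation pre_cs := (pre_control_set a b al be umin umax).
Local Notation m := (rate_min al umin umax).
Local Notation M := (rate_max al umin umax).

(* Along a solution with rate [w = u al], the coordinate [z] satisfies
   [z' = b z + x], so the ratio [r = z / x] satisfies [r' = 1 + (b - w) r];
   [lam w p = x (1 + (b - w) r)] is [x] times this velocity at the constant
   rate [w].  For [b > 0] the control set is the open cone, for [b < 0] its
   closure in [G]. *)
Definition kappa : R := a + b * be / al.
Definition zc (p : pt) : R := (snd p - a / b - be / al * fst p) / kappa.
Definition lam (w : R) (p : pt) : R := fst p + (b - w) * zc p.
Definition cone_point (x r : R) : pt := (x, a / b + be / al * x + kappa * r * x).

Definition ratio_inside (r : R) : Prop := 0 < b * (1 + (b - M) * r) /\ b * (1 + (b - m) * r) < 0.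
Definition cone_interior (p : pt) : Prop := 0 < fst p /\ 0 < b * lam M p /\ b * lam m p < 0.
Definition cone (p : pt) : Prop :=
  if Rlt_dec 0 b then cone_interior p else 0 < fst p /\ lam M p <= 0 /\ 0 <= lam m p.

Lemma kappa_neq_0 : kappa <> 0.
Proof.
  intro e. apply hc. unfold kappa in e.
  replace (a * al + b * be) with (al * (a + b * be / al)) by (field; auto). rewrite e. ring.
Qed.

Lemma zc_cone_point x r : zc (cone_point x r) = r * x.
Proof. assert (hk := kappa_neq_0). unfold zc, cone_point. simpl. field. auto. Qed.

Lemma lam_cone_point w x r : lam w (cone_point x r) = x * (1 + (b - w) * r).
Proof. unfold lam. rewrite zc_cone_point. unfold cone_point. simpl. ring. Qed.

Lemma cone_point_eta p : 0 < fst p -> cone_point (fst p) (zc p / fst p) = p.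
Proof.
  assert (hk := kappa_neq_0). intros hp. destruct p as [x y]. unfold cone_point, zc. simpl in *.
  f_equal. field. repeat split; auto; lra.
Qed.

Lemma zc_affine p : zc p = affine_form (- (be / al) / kappa) (1 / kappa) (- (a / b) / kappa) p.
Proof. unfold zc, affine_form, Rdiv. ring. Qed.

Lemma lam_affine w p : lam w p =
  affine_form (1 + (b - w) * (- (be / al) / kappa)) ((b - w) * (1 / kappa)) ((b - w) * (- (a / b) / kappa)) p.
Proof. unfold lam. rewrite zc_affine. unfold affine_form. ring. Qed.

Lemma snd_zc p : snd p = a / b + be / al * fst p + kappa * zc p.
Proof. assert (hk := kappa_neq_0). unfold zc. field. auto. Qed.

Lemma cone_interior_point x r : 0 < x -> (cone_interior (cone_point x r) <-> ratio_inside r).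
Proof.
  intros hx. unfold cone_interior, ratio_inside. rewrite !lam_cone_point. simpl.
  split; [intros [_ [h1 h2]]|intros [h1 h2]]; split; try split; auto; nra.
Qed.

Lemma cone_point_boundary x r : 0 < x -> b < 0 ->
  (cone (cone_point x r) <-> 1 + (b - M) * r <= 0 /\ 0 <= 1 + (b - m) * r).
Proof.
  intros hx hbn. unfold cone. destruct (Rlt_dec 0 b); [lra|]. rewrite !lam_cone_point. simpl.
  split; [intros [_ [h1 h2]]|intros [h1 h2]]; split; try split; auto; nra.
Qed.

Lemma ratio_inside_fixed w : m < w < M -> b * (w - b) < 0 -> ratio_inside (1 / (w - b)).
Proof.
  intros [h1 h2] h3. assert (hw : w - b <> 0) by (intro e; rewrite e in h3; lra).
  unfold ratio_inside. set (r := 1 / (w - b)).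
  assert (hbr : b * r < 0).
  { replace (b * r) with (b * (w - b) * (r * r)) by (unfold r; field; auto).
    assert (0 < r * r) by (apply Rsqr_pos_lt; unfold r; apply Rinv_neq_0_compat in hw; lra). nra. }
  replace (b * (1 + (b - M) * r)) with (b * r * (w - M)) by (unfold r; field; auto).
  replace (b * (1 + (b - m) * r)) with (b * r * (w - m)) by (unfold r; field; auto).
  split; nra.
Qed.

Lemma cone_flow w x0 r0 : m <= w <= M -> w <> b ->
  adm (fun _ => w / al) /\
  sol (fun _ => w / al) (cone_point x0 r0)
    (fun t => cone_point (x0 * exp (w * t)) (1 / (w - b) + (r0 - 1 / (w - b)) * exp ((b - w) * t))).
Proof.
  intros hw hwb. assert (hk := kappa_neq_0). assert (hwb' : w - b <> 0) by lra.
  apply const_control_solution.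
  - apply control_of_rate; auto; lra.
  - unfold cone_point. simpl. rewrite Rmult_0_r, exp_0. ring.
  - unfold cone_point. simpl. rewrite !Rmult_0_r, exp_0. field. auto.
  - intros t. auto_derive; auto. field. auto.
  - intros t. unfold kappa. auto_derive; auto. field. repeat split; auto.
Qed.

Lemma cone_flow_orbit w x0 r0 t : m <= w <= M -> w <> b -> 0 <= t ->
  orbit (cone_point x0 r0)
    (cone_point (x0 * exp (w * t)) (1 / (w - b) + (r0 - 1 / (w - b)) * exp ((b - w) * t))).
Proof.
  intros hw hwb ht. destruct (cone_flow w x0 r0 hw hwb) as [A S].
  eexists _, _, t. split; [exact A|split; [exact S|split; [lra|reflexivity]]].
Qed.

Lemma cone_rest w x0 t : m <= w <= M -> w <> b -> 0 <= t ->
  orbit (cone_point x0 (1 / (w - b))) (cone_point (x0 * exp (w * t)) (1 / (w - b))).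
Proof.
  intros hw hwb ht. assert (F := cone_flow_orbit w x0 (1 / (w - b)) t hw hwb ht).
  replace (1 / (w - b) + (1 / (w - b) - 1 / (w - b)) * exp ((b - w) * t)) with (1 / (w - b)) in F by ring.
  exact F.
Qed.

Lemma ratio_transfer w r0 r1 : m <= w <= M -> w <> b ->
  0 < (r1 - 1 / (w - b)) / (r0 - 1 / (w - b)) ->
  0 <= ln ((r1 - 1 / (w - b)) / (r0 - 1 / (w - b))) / (b - w) ->
  exists l, forall x0, orbit (cone_point x0 r0) (cone_point (x0 * exp l) r1).
Proof.
  intros hw hwb hR ht. set (rw := 1 / (w - b)) in *. set (R0 := (r1 - rw) / (r0 - rw)) in *.
  assert (hne : r0 - rw <> 0)
    by (intro e; unfold R0 in hR; rewrite e in hR; unfold Rdiv in hR;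
      rewrite Rinv_0, Rmult_0_r in hR; lra).
  exists (w * (ln R0 / (b - w))). intros x0.
  assert (F := cone_flow_orbit w x0 r0 (ln R0 / (b - w)) hw hwb ht). fold rw in F.
  replace ((b - w) * (ln R0 / (b - w))) with (ln R0) in F by (field; lra).
  rewrite exp_ln in F by auto. unfold R0 in F.
  replace (rw + (r0 - rw) * ((r1 - rw) / (r0 - rw))) with r1 in F by (field; auto). exact F.
Qed.

Lemma ratio_between c r0 r1 : c < r1 <= r0 \/ r0 <= r1 < c -> 0 < (r1 - c) / (r0 - c) <= 1.
Proof.
  intros [h|h].
  - split; [apply Rdiv_lt_0_compat; lra|]. apply (Rmult_le_reg_r (r0 - c)); [lra|].
    field_simplify; lra.
  - replace ((r1 - c) / (r0 - c)) with ((c - r1) / (c - r0)) by (field; lra).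
    split; [apply Rdiv_lt_0_compat; lra|]. apply (Rmult_le_reg_r (c - r0)); [lra|].
    field_simplify; lra.
Qed.

Lemma ratio_beyond c r0 r1 : c < r0 <= r1 \/ r1 <= r0 < c -> 1 <= (r1 - c) / (r0 - c).
Proof.
  intros [h|h].
  - apply (Rmult_le_reg_r (r0 - c)); [lra|]. field_simplify; lra.
  - replace ((r1 - c) / (r0 - c)) with ((c - r1) / (c - r0)) by (field; lra).
    apply (Rmult_le_reg_r (c - r0)); [lra|]. field_simplify; lra.
Qed.

Lemma ratio_attract w r0 r1 : m <= w <= M -> b < w ->
  (1 / (w - b) < r1 <= r0 \/ r0 <= r1 < 1 / (w - b)) ->
  exists l, forall x0, orbit (cone_point x0 r0) (cone_point (x0 * exp l) r1).
Proof.
  intros hw hbw h. destruct (ratio_between _ r0 r1 h) as [h1 h2].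
  apply (ratio_transfer w); auto; [lra|].
  set (R0 := (r1 - 1 / (w - b)) / (r0 - 1 / (w - b))) in *.
  assert (ln R0 <= 0) by (rewrite <- ln_1; apply ln_le; lra).
  replace (ln R0 / (b - w)) with (- ln R0 / (w - b)) by (field; lra). apply Rdiv_le_0_compat; lra.
Qed.

Lemma ratio_repel w r0 r1 : m <= w <= M -> w < b ->
  (1 / (w - b) < r0 <= r1 \/ r1 <= r0 < 1 / (w - b)) ->
  exists l, forall x0, orbit (cone_point x0 r0) (cone_point (x0 * exp l) r1).
Proof.
  intros hw hbw h. assert (h1 := ratio_beyond _ r0 r1 h).
  apply (ratio_transfer w); auto; [lra|lra|].
  apply Rdiv_le_0_compat; [|lra]. rewrite <- ln_1. apply ln_le; lra.
Qed.

Lemma ratio_inside_fixed_rate r : ratio_inside r -> m < b + 1 / r < M /\ b * r < 0.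
Proof.
  intros [h1 h2]. assert (hr : r <> 0) by (intros ->; lra).
  assert (hm := rate_min_neg al umin umax humin humax hal).
  assert (hM := rate_max_pos al umin umax humin humax hal).
  assert (E : forall w', 1 + (b - w') * r = r * (b + 1 / r - w')) by (intros; field; auto).
  rewrite E in h1, h2. split; [split|]; nra.
Qed.

(* [r' = 1 + (b - w) r]: for [b < 0] the fixed point [1/(w - b)] of a rate [w > b]
   is attracting, so [r] can be driven onto any admissible fixed point [r1]. *)
Lemma ratio_move_attracting r0 r1 : b < 0 -> ratio_inside r1 ->
  exists l, forall x0, orbit (cone_point x0 r0) (cone_point (x0 * exp l) r1).
Proof.
  intros hbn hr1. destruct (ratio_inside_fixed_rate r1 hr1) as [[h1 h2] hbr].
  assert (hr1p : 0 < r1) by nra. set (w1 := b + 1 / r1) in *.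
  assert (hw1 : 0 < w1 - b) by (unfold w1; replace (b + 1 / r1 - b) with (/ r1) by (field; lra);
    apply Rinv_0_lt_compat; auto).
  assert (hr1' : r1 = / (w1 - b)) by (unfold w1; replace (b + 1 / r1 - b) with (/ r1) by (field; lra);
    rewrite Rinv_inv; auto).
  assert (Mx : Rmax b m < w1) by (apply Rmax_lub_lt; lra).
  assert (Mx1 : b <= Rmax b m) by apply Rmax_l. assert (Mx2 : m <= Rmax b m) by apply Rmax_r.
  destruct (Rlt_or_le r0 r1) as [lt|ge].
  - set (w := (w1 + Rmax b m) / 2). apply (ratio_attract w); [unfold w; lra|unfold w; lra|right].
    split; [lra|]. unfold Rdiv. rewrite Rmult_1_l, hr1'.
    apply Rinv_lt_contravar; [apply Rmult_lt_0_compat|]; unfold w; lra.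
  - set (w := (w1 + M) / 2). apply (ratio_attract w); [unfold w; lra|unfold w; lra|left].
    split; [|lra]. unfold Rdiv. rewrite Rmult_1_l, hr1'.
    apply Rinv_lt_contravar; [apply Rmult_lt_0_compat|]; unfold w; lra.
Qed.

(* For [b > 0] the fixed points are repelling, so [r] can be driven away from
   any admissible fixed point [r0]. *)
Lemma ratio_move_repelling r0 r1 : 0 < b -> ratio_inside r0 ->
  exists l, forall x0, orbit (cone_point x0 r0) (cone_point (x0 * exp l) r1).
Proof.
  intros hbp hr0. destruct (ratio_inside_fixed_rate r0 hr0) as [[h1 h2] hbr].
  assert (hr0n : r0 < 0) by nra. set (w0 := b + 1 / r0) in *.
  assert (hw0 : w0 - b < 0) by (unfold w0; replace (b + 1 / r0 - b) with (/ r0) by (field; lra);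
    apply Rinv_lt_0_compat; auto).
  assert (hr0' : r0 = / (w0 - b)) by (unfold w0; replace (b + 1 / r0 - b) with (/ r0) by (field; lra);
    rewrite Rinv_inv; auto).
  assert (Mn : w0 < Rmin b M) by (apply Rmin_glb_lt; lra).
  assert (Mn1 : Rmin b M <= b) by apply Rmin_l. assert (Mn2 : Rmin b M <= M) by apply Rmin_r.
  destruct (Rle_or_lt r0 r1) as [le|gt].
  - set (w := (w0 + Rmin b M) / 2). apply (ratio_repel w); [unfold w; lra|unfold w; lra|left].
    split; [|lra]. unfold Rdiv. rewrite Rmult_1_l, hr0'.
    apply Rinv_lt_contravar; unfold w; [nra|lra].
  - set (w := (m + w0) / 2). apply (ratio_repel w); [unfold w; lra|unfold w; lra|right].
    split; [lra|]. unfold Rdiv. rewrite Rmult_1_l, hr0'.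
    apply Rinv_lt_contravar; unfold w; [nra|lra].
Qed.

Lemma ratio_move r0 r1 : b < 0 /\ ratio_inside r1 \/ 0 < b /\ ratio_inside r0 ->
  exists l, forall x0, orbit (cone_point x0 r0) (cone_point (x0 * exp l) r1).
Proof.
  intros [[hbn h]|[hbp h]]; [apply ratio_move_attracting|apply ratio_move_repelling]; auto.
Qed.

(* Pass through the fixed ratios of a positive rate [wa] and a negative rate [wb],
   resting at each long enough to adjust [x]. *)
Lemma cone_steer wa wb : m < wa < M -> m < wb < M -> b * (wa - b) < 0 -> b * (wb - b) < 0 ->
  0 < wa -> wb < 0 ->
  forall p q, 0 < fst p -> cone_interior q -> (b < 0 \/ cone_interior p) -> orbit p q.
Proof.
  intros hwa hwb hba hbb wap wbn p q hp hq hpc.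
  assert (hq0 : 0 < fst q) by apply hq.
  rewrite <- (cone_point_eta p hp), <- (cone_point_eta q hq0).
  set (x0 := fst p). set (x1 := fst q). set (r0 := zc p / fst p). set (r1 := zc q / fst q).
  assert (J1 : ratio_inside r1)
    by (apply (cone_interior_point x1 r1 hq0); unfold x1, r1; rewrite cone_point_eta; auto).
  assert (J0 : 0 < b -> ratio_inside r0).
  { intros hbp. destruct hpc as [h|h]; [lra|].
    apply (cone_interior_point x0 r0 hp); unfold x0, r0; rewrite cone_point_eta; auto. }
  set (ra := 1 / (wa - b)). set (rb := 1 / (wb - b)).
  assert (Ja : ratio_inside ra) by (apply ratio_inside_fixed; auto).
  assert (Jb : ratio_inside rb) by (apply ratio_inside_fixed; auto).
  assert (hsign : b < 0 \/ 0 < b) by (destruct (Rtotal_order b 0) as [h|[h|h]]; auto; contradiction).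
  destruct (ratio_move r0 ra ltac:(destruct hsign; [left|right]; auto)) as [l1 M1].
  destruct (ratio_move ra rb ltac:(destruct hsign; [left|right]; auto)) as [l2 M2].
  destruct (ratio_move rb r1 ltac:(destruct hsign; [left|right]; auto)) as [l3 M3].
  assert (wab : wa <> b) by (intro e; rewrite e in hba; lra).
  assert (wbb : wb <> b) by (intro e; rewrite e in hbb; lra).
  set (L := ln (x1 / x0) - l1 - l2 - l3).
  assert (gen : forall t1 t2, 0 <= t1 -> 0 <= t2 -> wa * t1 + wb * t2 = L ->
     orbit (cone_point x0 r0) (cone_point x1 r1)).
  { intros t1 t2 h1 h2 e.
    eapply orbit_plus_trans; [apply (M1 x0)|].
    eapply orbit_plus_trans; [apply (cone_rest wa _ t1); auto; lra|].
    eapply orbit_plus_trans; [apply M2|].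
    eapply orbit_plus_trans; [apply (cone_rest wb _ t2); auto; lra|].
    replace x1 with (x0 * exp l1 * exp (wa * t1) * exp l2 * exp (wb * t2) * exp l3); [apply M3|].
    rewrite !Rmult_assoc, <- !exp_plus.
    replace (l1 + (wa * t1 + (l2 + (wb * t2 + l3)))) with (ln (x1 / x0)) by (unfold L in e; lra).
    rewrite exp_ln by (apply Rdiv_lt_0_compat; auto). field. unfold x0; lra. }
  destruct (Rle_or_lt 0 L) as [h|h].
  - apply (gen (L / wa) 0); [apply Rdiv_le_0_compat; lra|lra|field; lra].
  - apply (gen 0 (L / wb)); [lra| |field; lra].
    replace (L / wb) with (- L / - wb) by (field; lra). apply Rdiv_le_0_compat; lra.
Qed.

Lemma cone_controllable p q : 0 < fst p -> cone_interior q -> (b < 0 \/ cone_interior p) -> orbit p q.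
Proof.
  assert (hm := rate_min_neg al umin umax humin humax hal).
  assert (hM := rate_max_pos al umin umax humin humax hal).
  destruct (Rlt_or_le 0 b) as [hbp|hbn].
  - assert (Rmin b M <= b) by apply Rmin_l. assert (Rmin b M <= M) by apply Rmin_r.
    assert (0 < Rmin b M) by (apply Rmin_pos; lra).
    apply (cone_steer (Rmin b M / 2) (m / 2)); try lra; nra.
  - assert (b <> 0 -> b < 0) by lra.
    assert (b <= Rmax b m) by apply Rmax_l. assert (m <= Rmax b m) by apply Rmax_r.
    assert (Rmax b m < 0) by (apply Rmax_lub_lt; lra).
    apply (cone_steer (M / 2) (Rmax b m / 2)); try lra; nra.
Qed.

Lemma fst_solution_lower_bound_unit u p g : adm u -> sol u p g -> 0 < fst p ->
  forall t, 0 <= t <= 1 -> fst p * exp m <= fst (g t).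
Proof.
  intros ha hs hp t ht.
  destruct (fst_solution_lower_bound a b al be umin umax u p g ha hs hp t ltac:(lra)) as [X _].
  assert (hm := rate_min_neg al umin umax humin humax hal).
  assert (exp m <= exp (m * t)) by (apply exp_le_compat; nra).
  assert (fst p * exp m <= fst p * exp (m * t)) by (apply Rmult_le_compat_l; lra).
  lra.
Qed.

Lemma lam_trace_monotone u p g w sg : adm u -> sol u p g -> 0 < fst p ->
  (forall v, umin <= v <= umax -> 0 <= sg * (v * al - w)) ->
  forall s t, 0 <= s <= t -> sg * lam w (g s) * exp (- b * s) <= sg * lam w (g t) * exp (- b * t).
Proof.
  intros ha hs hp hv s t hst. assert (hk := kappa_neq_0).
  set (c1 := sg * (1 + (b - w) * (- (be / al) / kappa))).
  set (c2 := sg * ((b - w) * (1 / kappa))). set (c0 := sg * ((b - w) * (- (a / b) / kappa))).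
  assert (E : forall s, sg * lam w (g s) * exp (- b * s) = affine_trace c1 c2 c0 (- b) 0 g s)
    by (intros s'; unfold affine_trace, c1, c2, c0; rewrite lam_affine; unfold affine_form; ring).
  rewrite !E. apply (affine_trace_nondecreasing a b al be umin umax u p g _ _ _ _ _ (fun x => 0 <= x) ha hs);
    [|lra|intros; lra].
  intros x hx _.
  replace (affine_trace_rate a b al be u c1 c2 c0 (- b) 0 g x)
    with (fst (g x) * (sg * (u x * al - w)) * exp (- b * x))
    by (unfold affine_trace_rate, affine_form, c1, c2, c0, kappa in *; field; repeat split; auto).
  assert (X := proj2 (fst_solution_lower_bound a b al be umin umax u p g ha hs hp x hx)).
  apply Rmult_le_pos; [apply Rmult_le_pos; [lra|apply hv, (proj1 ha)]|apply Rlt_le, exp_pos].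
Qed.

Lemma lam_sign_persists u p g w sg : adm u -> sol u p g -> 0 < fst p ->
  (forall v, umin <= v <= umax -> 0 <= sg * (v * al - w)) ->
  forall s t, 0 <= s <= t -> (0 <= sg * lam w (g s) -> 0 <= sg * lam w (g t)) /\
                          (0 < sg * lam w (g s) -> 0 < sg * lam w (g t)).
Proof.
  intros ha hs hp hv s t hst. assert (K := lam_trace_monotone u p g w sg ha hs hp hv s t hst).
  assert (0 < exp (- b * s)) by apply exp_pos. assert (0 < exp (- b * t)) by apply exp_pos.
  split; intros h; nra.
Qed.

Lemma zc_trace u p g sg d : adm u -> sol u p g ->
  forall s t, s <= t -> (forall x, s < x < t -> d <= sg * (b * zc (g x) + fst (g x))) ->
  sg * zc (g s) - d * s <= sg * zc (g t) - d * t.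
Proof.
  intros ha hs s t hst H. assert (hk := kappa_neq_0).
  set (c1 := sg * (- (be / al) / kappa)). set (c2 := sg * (1 / kappa)). set (c0 := sg * (- (a / b) / kappa)).
  assert (E : forall s, sg * zc (g s) - d * s = affine_trace c1 c2 c0 0 (- d) g s)
    by (intros s'; unfold affine_trace, c1, c2, c0; rewrite zc_affine, Rmult_0_l, exp_0;
        unfold affine_form; ring).
  rewrite !E. apply (affine_trace_nondecreasing a b al be umin umax u p g _ _ _ _ _
    (fun x => d <= sg * (b * zc (g x) + fst (g x))) ha hs); auto.
  intros x hx _.
  replace (affine_trace_rate a b al be u c1 c2 c0 0 (- d) g x) with (sg * (b * zc (g x) + fst (g x)) - d)
    by (unfold affine_trace_rate, affine_form, zc, c1, c2, c0, kappa in *; rewrite !Rmult_0_l, exp_0;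
        field; repeat split; auto).
  lra.
Qed.

Lemma zc_rate_bound w sg q : w <> b -> 0 <= sg * b * (b - w) * lam w q ->
  (- sg * w / (b - w)) * fst q <= sg * (b * zc q + fst q).
Proof.
  intros hw h.
  replace (sg * (b * zc q + fst q))
    with (sg * b * (b - w) * lam w q / ((b - w) * (b - w)) + (- sg * w / (b - w)) * fst q)
    by (unfold lam; field; lra).
  assert (0 <= sg * b * (b - w) * lam w q / ((b - w) * (b - w))); [|lra].
  apply Rdiv_le_0_compat; auto. apply Rsqr_pos_lt. lra.
Qed.

(* As [z' = b z + x] and [x] is bounded below on [[0, 1]], [sg z] increases
   strictly while the trajectory stays in [Good]. *)
Lemma cone_excludes (Good Bad : pt -> Prop) sg k : closed2 Bad -> 0 < k ->
  (forall q, Good q -> 0 < fst q -> k * fst q <= sg * (b * zc q + fst q)) ->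
  (forall u g q, adm u -> sol u q g -> inG q -> forall s t, 0 <= s <= t -> Bad (g s) -> Bad (g t)) ->
  (forall u g q t, adm u -> sol u q g -> inG q -> Good q -> 0 <= t ->
     (forall s, 0 <= s <= t -> ~ Bad (g s)) -> Good (g t)) ->
  forall D, pre_cs D -> forall p, D p -> Good p -> ~ Bad p -> False.
Proof.
  intros hB hk hrate habs hgood.
  assert (hzc : lipschitz (fun q => sg * zc q) _)
    by (eapply lipschitz_ext; [intros q; rewrite zc_affine; reflexivity|apply lipschitz_scale_affine]).
  assert (hpos := fun u g q ha hs hq t ht => proj2 (fst_solution_lower_bound a b al be umin umax u q g ha hs hq t ht)).
  apply (pre_control_set_excludes a b al be umin umax Good Bad _ _ hzc hB habs).
  - intros u g q t ha hs hq ht hG hnb. assert (Z := zc_trace u q g sg 0 ha hs 0 t ht).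
    rewrite (proj1 hs) in Z. enough (sg * zc q - 0 * 0 <= sg * zc (g t) - 0 * t) by lra.
    apply Z. intros x hx. assert (X := hpos u g q ha hs hq x ltac:(lra)).
    assert (Y := hrate (g x) (hgood u g q x ha hs hq hG ltac:(lra) ltac:(intros; apply hnb; lra)) X).
    nra.
  - intros u g q ha hs hq hG hnb. split; [|apply (hgood u g q 1); auto; lra].
    set (d := k * (fst q * exp m)).
    assert (hd : 0 < d) by (unfold d; apply Rmult_lt_0_compat; auto; apply Rmult_lt_0_compat; auto;
      apply exp_pos).
    assert (Z := zc_trace u q g sg d ha hs 0 1 ltac:(lra)). rewrite (proj1 hs) in Z.
    enough (sg * zc q - d * 0 <= sg * zc (g 1) - d * 1) by lra.
    apply Z. intros x hx. assert (X := hpos u g q ha hs hq x ltac:(lra)).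
    assert (Y := hrate (g x) (hgood u g q x ha hs hq hG ltac:(lra) ltac:(intros; apply hnb; lra)) X).
    assert (XL := fst_solution_lower_bound_unit u q g ha hs hq x ltac:(lra)).
    unfold d. assert (k * (fst q * exp m) <= k * fst (g x)) by (apply Rmult_le_compat_l; lra). lra.
Qed.

Lemma lipschitz_lam w : exists K, lipschitz (lam w) K.
Proof. eexists. eapply lipschitz_ext; [apply lam_affine|apply lipschitz_affine_form]. Qed.

Lemma lam_persists_min u g q s t : adm u -> sol u q g -> inG q -> 0 <= s <= t ->
  (0 <= lam m (g s) -> 0 <= lam m (g t)) /\ (0 < lam m (g s) -> 0 < lam m (g t)).
Proof.
  intros ha hs hq hst. assert (H := lam_sign_persists u q g m 1 ha hs hq
    ltac:(intros v hv; assert (W := rate_bounds al umin umax v hv); lra) s t hst).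
  rewrite !Rmult_1_l in H. exact H.
Qed.

Lemma lam_persists_max u g q s t : adm u -> sol u q g -> inG q -> 0 <= s <= t ->
  (lam M (g s) <= 0 -> lam M (g t) <= 0) /\ (lam M (g s) < 0 -> lam M (g t) < 0).
Proof.
  intros ha hs hq hst. assert (H := lam_sign_persists u q g M (-1) ha hs hq
    ltac:(intros v hv; assert (W := rate_bounds al umin umax v hv); lra) s t hst).
  split; intros h; lra.
Qed.

Lemma Rdiv_pos_of_mul x y : 0 < x * y -> 0 < x / y.
Proof.
  intros h. assert (hy : y <> 0) by (intros ->; lra).
  replace (x / y) with (x * y / (y * y)) by (field; auto).
  apply Rdiv_lt_0_compat; auto. apply Rsqr_pos_lt; auto.
Qed.

(* Where [lam m >= 0] or [lam M <= 0] the sign persists and [z] is strictly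
   monotone, so such points cannot recur. *)
Lemma cone_maximal_pos D p : 0 < b -> pre_cs D -> D p -> cone_interior p.
Proof.
  intros hbp hD hp.
  assert (hm := rate_min_neg al umin umax humin humax hal).
  assert (hM := rate_max_pos al umin umax humin humax hal).
  assert (hx : 0 < fst p) by (apply (proj1 hD); auto).
  assert (hLm : lam m p < 0).
  { apply Rnot_le_lt. intros hgood.
    apply (cone_excludes (fun q => 0 <= lam m q) (fun _ => False) 1 (- 1 * m / (b - m)) closed2_False)
      with D p; auto.
    - apply Rdiv_pos_of_mul; nra.
    - intros q hq hxq. apply zc_rate_bound; [lra|]. assert (0 < 1 * b * (b - m)) by nra. nra.
    - intros u g q t ha hs hq hG ht _. apply (lam_persists_min u g q 0 t); auto; [lra|].
      rewrite (proj1 hs). auto. }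
  assert (hLM : 0 < lam M p).
  { apply Rnot_le_lt. intros hgood.
    assert (bM : M < b) by (unfold lam in hgood, hLm; nra).
    apply (cone_excludes (fun q => lam M q <= 0) (fun _ => False) (-1) (- -1 * M / (b - M)) closed2_False)
      with D p; auto.
    - apply Rdiv_pos_of_mul; nra.
    - intros q hq hxq. apply zc_rate_bound; [lra|]. assert (- 1 * b * (b - M) < 0) by nra. nra.
    - intros u g q t ha hs hq hG ht _. apply (lam_persists_max u g q 0 t); auto; [lra|].
      rewrite (proj1 hs). auto. }
  repeat split; auto; nra.
Qed.

Lemma cone_maximal_neg D p : b < 0 -> pre_cs D -> D p -> lam M p <= 0 /\ 0 <= lam m p.
Proof.
  intros hbn hD hp.
  assert (hm := rate_min_neg al umin umax humin humax hal).
  assert (hM := rate_max_pos al umin umax humin humax hal).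
  destruct (lipschitz_lam m) as [Km Lm]. destruct (lipschitz_lam M) as [KM LM].
  assert (hLM : lam M p <= 0).
  { apply Rnot_lt_le. intros hgood.
    apply (cone_excludes (fun q => 0 < lam M q) (fun q => lam M q <= 0) 1 (- 1 * M / (b - M))
      (closed2_le _ _ 0 LM)) with D p; auto; try lra.
    - apply Rdiv_pos_of_mul; nra.
    - intros q hq hxq. apply zc_rate_bound; [lra|]. assert (0 < 1 * b * (b - M)) by nra. nra.
    - intros u g q ha hs hq s t hst. apply (lam_persists_max u g q s t); auto.
    - intros u g q t ha hs hq _ ht hnb. apply Rnot_le_lt, (hnb t); lra. }
  split; [auto|]. apply Rnot_lt_le. intros hgood.
  assert (bm : b < m) by (unfold lam in hgood, hLM; assert (0 < fst p) by (apply (proj1 hD); auto); nra).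
  apply (cone_excludes (fun q => lam m q < 0) (fun q => 0 <= lam m q) (-1) (- -1 * m / (b - m))
    (closed2_ge _ _ 0 Lm)) with D p; auto; try lra.
  - apply Rdiv_pos_of_mul; nra.
  - intros q hq hxq. apply zc_rate_bound; [lra|]. assert (- 1 * b * (b - m) < 0) by nra. nra.
  - intros u g q ha hs hq s t hst. apply (lam_persists_min u g q s t); auto.
  - intros u g q t ha hs hq _ ht hnb. apply Rnot_le_lt. intro h. apply (hnb t); lra.
Qed.

Lemma cone_maximal D : pre_cs D -> forall p, D p -> cone p.
Proof.
  intros hD p hp. unfold cone. destruct (Rlt_dec 0 b) as [hbp|hbn].
  - apply (cone_maximal_pos D); auto.
  - split; [apply (proj1 hD); auto|]. apply (cone_maximal_neg D); auto. lra.
Qed.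

Lemma cone_point_scale x x' r : 0 < x -> 0 < x' -> cone (cone_point x r) -> cone (cone_point x' r).
Proof.
  intros hx hx'. unfold cone. destruct (Rlt_dec 0 b).
  - rewrite !(cone_interior_point _ _ hx), !(cone_interior_point _ _ hx'). auto.
  - rewrite !lam_cone_point. simpl. intros [_ [h1 h2]]. split; [auto|split]; nra.
Qed.

Lemma cone_fixed_rate p : cone p -> exists w, m <= w <= M /\ w <> b /\ zc p / fst p = 1 / (w - b).
Proof.
  intros hp. assert (hx : 0 < fst p) by (unfold cone in hp; destruct (Rlt_dec 0 b); apply hp).
  rewrite <- (cone_point_eta p hx) in hp. set (r := zc p / fst p) in *.
  assert (H : m <= b + 1 / r <= M /\ b * r < 0).
  { unfold cone in hp. destruct (Rlt_dec 0 b) as [hbp|hbn].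
    - apply (cone_interior_point _ _ hx) in hp.
      destruct (ratio_inside_fixed_rate r hp) as [? ?]. split; [lra|auto].
    - assert (hM := rate_max_pos al umin umax humin humax hal).
      assert (hbn' : b < 0) by lra.
      rewrite !lam_cone_point in hp. destruct hp as [_ [h1 h2]].
      assert (h1' : 1 + (b - M) * r <= 0) by (apply (Rmult_le_reg_l (fst p)); auto; lra).
      assert (h2' : 0 <= 1 + (b - m) * r) by (apply (Rmult_le_reg_l (fst p)); auto; lra).
      clear h1 h2. rename h1' into h1. rename h2' into h2.
      assert (hr : 0 < r) by (destruct (Rle_or_lt r 0); [nra|auto]).
      assert (E : forall w', 1 + (b - w') * r = r * (b + 1 / r - w')) by (intros; field; lra).
      rewrite E in h1, h2. split; [split|]; nra. }
  destruct H as [hw hbr]. assert (hr : r <> 0) by (intros e; rewrite e in hbr; lra).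
  exists (b + 1 / r). split; [auto|split].
  - intro e. assert (1 / r = 0) by lra. unfold Rdiv in H. rewrite Rmult_1_l in H.
    apply Rinv_neq_0_compat in hr. contradiction.
  - replace (b + 1 / r - b) with (1 / r) by ring. field. auto.
Qed.

Lemma dist2_cone_point x r r' : dist2 (cone_point x r') (cone_point x r) = Rabs (kappa * x * (r' - r)).
Proof. unfold cone_point. rewrite dist2_vert. f_equal. ring. Qed.

Lemma cone_adherent_interior q : cone q -> adherent cone_interior q.
Proof.
  intros hq e he. unfold cone in hq. destruct (Rlt_dec 0 b) as [hbp|hbn].
  - exists q. rewrite dist2_refl. auto.
  - assert (hx : 0 < fst q) by apply hq.
    assert (hM := rate_max_pos al umin umax humin humax hal).
    assert (hm := rate_min_neg al umin umax humin humax hal).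
    set (ra := 1 / (M / 2 - b)).
    assert (Ja : ratio_inside ra) by (apply ratio_inside_fixed; nra).
    rewrite <- (cone_point_eta q hx) in hq |- *. set (r := zc q / fst q) in *. set (x := fst q) in *.
    rewrite !lam_cone_point in hq. destruct hq as [_ [h1 h2]]. destruct Ja as [Ja1 Ja2].
    simpl in h1, h2. assert (hbn' : b < 0) by lra.
    assert (k1 : 1 + (b - M) * r <= 0) by (apply (Rmult_le_reg_l x); auto; lra).
    assert (k2 : 0 <= 1 + (b - m) * r) by (apply (Rmult_le_reg_l x); auto; lra).
    set (D := Rabs (kappa * x * (ra - r))). assert (hD : 0 <= D) by apply Rabs_pos.
    set (s := Rmin 1 (e / (D + 1))).
    assert (hs0 : 0 < s) by (apply Rmin_pos; [lra|apply Rdiv_lt_0_compat; lra]).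
    assert (hs1 : s <= 1) by apply Rmin_l. assert (hs2 : s <= e / (D + 1)) by apply Rmin_r.
    exists (cone_point x (r + s * (ra - r))). split.
    + apply (cone_interior_point _ _ hx).
      assert (E : forall w, b * (1 + (b - w) * (r + s * (ra - r)))
                 = (1 - s) * (b * (1 + (b - w) * r)) + s * (b * (1 + (b - w) * ra))) by (intros; ring).
      assert (0 <= b * (1 + (b - M) * r)) by nra. assert (b * (1 + (b - m) * r) <= 0) by nra.
      split; rewrite E; nra.
    + rewrite dist2_cone_point. replace (kappa * x * (r + s * (ra - r) - r))
      with (s * (kappa * x * (ra - r))) by ring.
      rewrite Rabs_mult, Rabs_right by lra. fold D.
      assert (s * D <= e / (D + 1) * D) by (apply Rmult_le_compat_r; auto).
      assert (e / (D + 1) * D < e) by (apply (Rmult_lt_reg_r (D + 1)); [lra|]; field_simplify; nra).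
      lra.
Qed.

Lemma cone_pre_control_set : pre_cs cone.
Proof.
  assert (hx : forall p, cone p -> 0 < fst p) by (intros p; unfold cone; destruct (Rlt_dec 0 b);
    intros h; apply h).
  split; [|split].
  - exact hx.
  - intros p hp. destruct (cone_fixed_rate p hp) as [w [hw [hwb hr]]].
    destruct (cone_flow w (fst p) (zc p / fst p) hw hwb) as [A S].
    rewrite (cone_point_eta p (hx p hp)) in S. eexists _, _. split; [exact A|split; [exact S|]].
    intros t ht. cbv beta. rewrite hr. replace (1 / (w - b) + (1 / (w - b) - 1 / (w - b)) * exp ((b - w) * t))
      with (1 / (w - b)) by ring. rewrite <- hr.
    apply (cone_point_scale (fst p)); [apply hx; auto|apply Rmult_lt_0_compat; [apply hx;
      auto|apply exp_pos]|].
    rewrite cone_point_eta; auto.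
  - intros p hp q hq. split; [apply hx; auto|]. intros e he.
    destruct (cone_adherent_interior q hq e he) as [q' [hq' hd]]. exists q'. split; auto.
    apply cone_controllable; [apply hx; auto|auto|].
    unfold cone in hp. destruct (Rlt_dec 0 b); [right; auto|left; lra].
Qed.

Lemma cone_interior_open q : cone_interior q -> interior2 cone q.
Proof.
  intros [hx [h1 h2]].
  assert (L : forall c w, exists K, lipschitz (fun s => c * lam w s) K)
    by (intros c w; eexists; eapply lipschitz_ext; [intros s; rewrite lam_affine;
      reflexivity|apply lipschitz_scale_affine]).
  destruct (L b M) as [K2 L2]. destruct (L (- b) m) as [K3 L3].
  destruct (lipschitz_positive_ball _ _ q (lipschitz_affine_form 1 0 0) ltac:(unfold affine_form;
    lra)) as [r1 [hr1 H1]].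
  destruct (lipschitz_positive_ball _ _ q L2 h1) as [r2 [hr2 H2]].
  destruct (lipschitz_positive_ball _ _ q L3 ltac:(lra)) as [r3 [hr3 H3]].
  exists (Rmin r1 (Rmin r2 r3)). split; [repeat apply Rmin_pos; auto|].
  intros s hs.
  assert (Rmin r1 (Rmin r2 r3) <= r1) by apply Rmin_l.
  assert (Rmin r1 (Rmin r2 r3) <= Rmin r2 r3) by apply Rmin_r.
  assert (Rmin r2 r3 <= r2) by apply Rmin_l. assert (Rmin r2 r3 <= r3) by apply Rmin_r.
  assert (k1 := H1 s ltac:(lra)). assert (k2 := H2 s ltac:(lra)). assert (k3 := H3 s ltac:(lra)).
  unfold affine_form in k1. unfold cone. destruct (Rlt_dec 0 b).
  - split; [lra|split; lra].
  - split; [lra|split; nra].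
Qed.

Lemma cone_interior_of_interior q : interior2 cone q -> cone_interior q.
Proof.
  intros [rho [hrho H]].
  assert (hq : cone q) by (apply H; rewrite dist2_refl; auto).
  unfold cone in hq. destruct (Rlt_dec 0 b) as [hbp|hbn]; [auto|].
  assert (hbn' : b < 0) by lra. assert (hx : 0 < fst q) by apply hq.
  assert (hM := rate_max_pos al umin umax humin humax hal).
  rewrite <- (cone_point_eta q hx) in H |- *. set (r := zc q / fst q) in *. set (x := fst q) in *.
  set (d := rho / (2 * (Rabs (kappa * x) + 1))).
  assert (hkx : 0 <= Rabs (kappa * x)) by apply Rabs_pos.
  assert (hd : 0 < d) by (apply Rdiv_lt_0_compat; lra).
  assert (hball : forall r', Rabs (r' - r) <= d -> cone (cone_point x r')).
  { intros r' hr'. apply H. rewrite dist2_cone_point, Rabs_mult.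
    assert (Rabs (kappa * x) * Rabs (r' - r) <= Rabs (kappa * x) * d) by (apply Rmult_le_compat_l; auto).
    assert (Rabs (kappa * x) * d < rho) by (unfold d;
      apply (Rmult_lt_reg_r (2 * (Rabs (kappa * x) + 1))); [lra|];
      field_simplify; nra).
    lra. }
  assert (Hp := proj1 (cone_point_boundary x (r + d) hx hbn') (hball (r + d)
    ltac:(rewrite Rabs_right; lra))).
  assert (Hm := proj1 (cone_point_boundary x (r - d) hx hbn') (hball (r - d)
    ltac:(rewrite Rabs_left; lra))).
  destruct Hp as [Hp1 Hp2]. destruct Hm as [Hm1 Hm2].
  apply (cone_interior_point x r hx). split.
  - assert (1 + (b - M) * r < 0) by nra. nra.
  - destruct (Rtotal_order b m) as [h|[h|h]].
    + assert (0 < 1 + (b - m) * r) by nra. nra.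
    + rewrite h. lra.
    + assert (0 < 1 + (b - m) * r) by nra. nra.
Qed.

Definition sector (v1 v2 q : pt) : Prop :=
  exists s t, 0 < s /\ 0 < t /\ q = (s * fst v1 + t * fst v2, a / b + s * snd v1 + t * snd v2).

Lemma cone_interior_ratio q : cone_interior q <-> 0 < fst q /\ ratio_inside (zc q / fst q).
Proof.
  split.
  - intros hq. assert (hx : 0 < fst q) by apply hq. split; auto.
    apply (cone_interior_point (fst q)); auto. rewrite cone_point_eta; auto.
  - intros [hx hr]. rewrite <- (cone_point_eta q hx). apply cone_interior_point; auto.
Qed.

Lemma sector_between rho1 rho2 q : rho1 < rho2 ->
  (0 < fst q /\ rho1 < zc q / fst q < rho2 <->
   sector (1, be / al + kappa * rho1) (1, be / al + kappa * rho2) q).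
Proof.
  intros h. assert (hk := kappa_neq_0). split.
  - intros [hx hr]. set (r := zc q / fst q) in *.
    exists (fst q * (rho2 - r) / (rho2 - rho1)), (fst q * (r - rho1) / (rho2 - rho1)).
    split; [apply Rdiv_lt_0_compat; nra|split; [apply Rdiv_lt_0_compat; nra|]].
    assert (Ey := snd_zc q). destruct q as [x y]. simpl in *.
    unfold r in *. set (Z := zc (x, y)) in *. rewrite Ey. f_equal; field; lra.
  - intros [s [t [hs [ht ->]]]]. simpl.
    replace (zc _) with (s * rho1 + t * rho2) by (unfold zc; simpl; field; auto).
    split; [lra|]. replace (s * 1 + t * 1) with (s + t) by ring.
    split; [apply (Rmult_lt_reg_r (s + t))|apply (Rmult_lt_reg_r (s + t))]; try lra;
      field_simplify; nra.
Qed.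

Lemma sector_half sg rho q : sg * sg = 1 ->
  (0 < fst q /\ 0 < sg * (zc q / fst q - rho) <->
   sector (1, be / al + kappa * rho) (0, sg * kappa) q).
Proof.
  intros hsg. assert (hk := kappa_neq_0). split.
  - intros [hx hr]. set (r := zc q / fst q) in *.
    exists (fst q), (fst q * (sg * (r - rho))).
    split; [auto|split; [nra|]].
    assert (Ey := snd_zc q). destruct q as [x y]. simpl in *.
    unfold r in *. set (Z := zc (x, y)) in *. rewrite Ey. f_equal; [ring|].
    transitivity (a / b + x * (be / al + kappa * rho) + kappa * (sg * sg) * (Z - x * rho));
      [rewrite hsg; ring|field; lra].
  - intros [s [t [hs [ht ->]]]]. simpl.
    replace (zc _) with (s * rho + t * sg) by (unfold zc; simpl; field; auto).
    split; [lra|]. replace (s * 1 + t * 0) with s by ring.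
    replace (sg * ((s * rho + t * sg) / s - rho)) with (t * (sg * sg) / s) by (field; lra).
    rewrite hsg. apply Rdiv_lt_0_compat; lra.
Qed.

Lemma ratio_side w r : w <> b -> b * (1 + (b - w) * r) = b * (b - w) * (r - 1 / (w - b)).
Proof. intros hw. field. lra. Qed.

Lemma fixed_ratios_lt : b * (m - b) < 0 -> b * (M - b) < 0 -> 1 / (M - b) < 1 / (m - b).
Proof.
  intros h1 h2. assert (hm := rate_min_neg al umin umax humin humax hal).
  assert (hM := rate_max_pos al umin umax humin humax hal).
  assert (0 < (m - b) * (M - b)) by nra.
  apply (Rmult_lt_reg_r ((m - b) * (M - b))); auto. field_simplify; nra.
Qed.

Lemma cone_interior_sector_finite : b * (m - b) < 0 -> b * (M - b) < 0 ->
  let rM := 1 / (M - b) in let rm := 1 / (m - b) in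
  forall q, cone_interior q <-> sector (1, be / al + kappa * rM) (1, be / al + kappa * rm) q.
Proof.
  intros h1 h2 rM rm q. assert (hlt := fixed_ratios_lt h1 h2).
  assert (hmb : m <> b) by (intros e; rewrite e in h1; lra).
  assert (hMb : M <> b) by (intros e; rewrite e in h2; lra).
  rewrite cone_interior_ratio, <- sector_between by auto. unfold ratio_inside.
  rewrite !ratio_side by auto. fold rM rm. split; intros [hx [k1 k2]]; split; auto; split; nra.
Qed.

Lemma cone_interior_sector : exists v1 v2 : pt,
  fst v1 * snd v2 - snd v1 * fst v2 <> 0 /\ forall q, cone_interior q <-> sector v1 v2 q.
Proof.
  assert (hk := kappa_neq_0).
  assert (hm := rate_min_neg al umin umax humin humax hal).
  assert (hM := rate_max_pos al umin umax humin humax hal).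
  set (rM := 1 / (M - b)). set (rm := 1 / (m - b)).
  assert (finite : b * (m - b) < 0 -> b * (M - b) < 0 -> exists v1 v2 : pt,
    fst v1 * snd v2 - snd v1 * fst v2 <> 0 /\ forall q, cone_interior q <-> sector v1 v2 q).
  { intros h1 h2. exists (1, be / al + kappa * rM), (1, be / al + kappa * rm).
    split; [|apply cone_interior_sector_finite; auto]. simpl.
    replace (1 * (be / al + kappa * rm) - (be / al + kappa * rM) * 1) with (kappa * (rm - rM)) by ring.
    assert (hlt := fixed_ratios_lt h1 h2). fold rM rm in hlt. apply Rmult_integral_contrapositive_currified; lra. }
  destruct (Rlt_or_le 0 b) as [hbp|hbn].
  - destruct (Rlt_or_le M b) as [hMb|hbM]; [apply finite; nra|].
    exists (1, be / al + kappa * rm), (0, -1 * kappa). simpl. split.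
    + replace (1 * (-1 * kappa) - (be / al + kappa * rm) * 0) with (- kappa) by ring. lra.
    + intros q. rewrite cone_interior_ratio, <- sector_half by ring. unfold ratio_inside.
      rewrite (ratio_side m) by lra. fold rm.
      assert (hrm : rm < 0) by (unfold rm, Rdiv; rewrite Rmult_1_l; apply Rinv_lt_0_compat; lra).
      set (r := zc q / fst q). assert (hbm : 0 < b * (b - m)) by nra. split.
      * intros [hx [k1 k2]]. split; auto. nra.
      * intros [hx k]. split; auto. assert (r < rm) by lra.
        assert (0 <= (b - M) * r) by nra. split; nra.
  - assert (hbn' : b < 0) by lra.
    destruct (Rlt_or_le b m) as [hbm|hmb]; [apply finite; nra|].
    exists (1, be / al + kappa * rM), (0, 1 * kappa). simpl. split.
    + replace (1 * (1 * kappa) - (be / al + kappa * rM) * 0) with kappa by ring. auto.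
    + intros q. rewrite cone_interior_ratio, <- sector_half by ring. unfold ratio_inside.
      rewrite (ratio_side M) by lra. fold rM.
      assert (hrM : 0 < rM) by (unfold rM; apply Rdiv_lt_0_compat; lra).
      set (r := zc q / fst q). assert (hbM : 0 < b * (b - M)) by nra. split.
      * intros [hx [k1 k2]]. split; auto. nra.
      * intros [hx k]. split; auto. assert (rM < r) by lra.
        assert (0 <= (b - m) * r) by nra. split; nra.
Qed.

Lemma cone_unique_control_set : exists C, is_control_set a b al be umin umax C /\
  (forall D, is_control_set a b al be umin umax D -> set_eq D C) /\
  exists v1 v2 : pt, fst v1 * snd v2 - snd v1 * fst v2 <> 0 /\
    set_eq (interior2 C) (sector v1 v2) /\ (forall q, sector v1 v2 q -> 0 < fst q).
Proof.
  exists cone.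
  destruct (control_set_of_maximum a b al be umin umax cone cone_pre_control_set cone_maximal) as [H1 H2].
  split; [exact H1|split; [exact H2|]].
  destruct cone_interior_sector as [v1 [v2 [hdet hS]]]. exists v1, v2. split; [exact hdet|split].
  - intros q. rewrite <- hS. split; [apply cone_interior_of_interior|apply cone_interior_open].
  - intros q hq. apply hS in hq. apply hq.
Qed.

End Cone.

Lemma control_set_cone a b al be umin umax : umin < 0 -> 0 < umax ->
  al * (a * al + b * be) <> 0 -> b <> 0 ->
  exists C, is_control_set a b al be umin umax C /\
    (forall D, is_control_set a b al be umin umax D -> set_eq D C) /\
    exists v1 v2 : pt, fst v1 * snd v2 - snd v1 * fst v2 <> 0 /\
      let S := fun q : pt => exists s t, 0 < s /\ 0 < t /\
                 q = (s * fst v1 + t * fst v2, a / b + s * snd v1 + t * snd v2) in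
      set_eq (interior2 C) S /\ (forall q, S q -> 0 < fst q).
Proof.
  intros humin humax h hb.
  apply cone_unique_control_set; auto; intro e; apply h; rewrite e; ring.
Qed.

Theorem mainTheorem11 (umin umax a b al be : R)
  (humin : umin < 0) (humax : 0 < umax)
  (hab : a <> 0 \/ b <> 0) (halbe : al <> 0 \/ be <> 0) :
  (* 1 *)
  (al = 0 -> a * al + b * be = 0 ->
     exists eps, 0 < eps /\ forall x, 1 - eps < x < 1 + eps ->
       is_control_set a b al be umin umax (fun p => fst p = x)) /\
  (* 2 *)
  (al = 0 -> a * al + b * be <> 0 ->
     forall x, 0 < x ->
       exists I : R -> Prop,
         is_interval I /\
         (exists M, forall y, I y -> Rabs y <= M) /\
         (exists y0 r, 0 < r /\ forall y, Rabs (y - y0) < r -> I y) /\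
         I (- a / b * (x - 1)) /\
         is_control_set a b al be umin umax (fun p => fst p = x /\ I (snd p))) /\
  (* 3 *)
  (al <> 0 -> a * al + b * be = 0 ->
     let L := fun p : pt => 0 < fst p /\ snd p = be / al * (fst p - 1) in
     is_control_set a b al be umin umax L /\
     forall C, is_control_set a b al be umin umax C -> set_eq C L) /\
  (* 4 *)
  (al * (a * al + b * be) <> 0 -> b = 0 ->
     is_control_set a b al be umin umax inG /\
     forall C, is_control_set a b al be umin umax C -> set_eq C inG) /\
  (* 5 *)
  (al * (a * al + b * be) <> 0 -> b <> 0 ->
     exists C, is_control_set a b al be umin umax C /\
       (forall D, is_control_set a b al be umin umax D -> set_eq D C) /\
       exists v1 v2 : pt,
         fst v1 * snd v2 - snd v1 * fst v2 <> 0 /\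
         let S := fun q : pt => exists s t, 0 < s /\ 0 < t /\
                    q = (s * fst v1 + t * fst v2, a / b + s * snd v1 + t * snd v2) in
         set_eq (interior2 C) S /\ (forall q, S q -> 0 < fst q)).
Proof.
  split; [|split; [|split; [|split]]].
  - apply control_sets_vertical_lines; auto.
  - apply control_sets_vertical_segments; auto.
  - apply control_set_invariant_line; auto.
  - apply control_set_whole_group; auto.
  - apply control_set_cone; auto.
Qed.
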